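(* Let $u_0,u_1,\dots,u_{n+1}\in\mathbb{Z}^2$ with $u_{n+1}=u_0$ and $u_i\times u_{i+1}=1$ for $0\le i\le n$, such that the lines with normals $u_0,\dots,u_n$, taken in counterclockwise order, go exactly once around the origin (covering all of $\mathbb{R}^2$). Let $z\in\mathbb{C}$ and $\underline\omega\in\mathbb{C}^2$ with $\underline\omega\times u_i\notin\mathbb{R}$ for all $i$. Then $$\prod_{i=0}^{n}\big(e^{2\pi iz}\,\big|\,e^{2\pi i\,\underline\omega\times u_i},e^{-2\pi i\,\underline\omega\times u_{i+1}}\big)_\infty=1-e^{2\pi iz}.$$
   Context: For $a,b\in\mathbb{C}^2$, $a\times b=\det[a,b]=a_1b_2-a_2b_1$. q-shifted factorial: for $x\in\mathbb{C}$ and $q_j=e^{2\pi i\omega_j}$, $\omega_j\in\mathbb{C}\setminus\mathbb{R}$: if all $|q_j|<1$, $(x|q_0,q_1)_\infty=\prod_{j_0,j_1\ge0}(1-xq_0^{j_0}q_1^{j_1})$; in general (symmetric in the $q_j$), if $|q_0|>1>|q_1|$ then $(x|q_0,q_1)_\infty=(q_0^{-1}x|q_0^{-1},q_1)_\infty^{-1}$, and if both $|q_0|,|q_1|>1$ then $(x|q_0,q_1)_\infty=(q_0^{-1}q_1^{-1}x|q_0^{-1},q_1^{-1})_\infty$. *)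

From Stdlib Require Import Reals ZArith ClassicalEpsilon.
From Coquelicot Require Import Coquelicot.
Open Scope R_scope.

Definition crossZ (a b : Z * Z) : Z := (fst a * snd b - snd a * fst b)%Z.

Definition crossCZ (w : C * C) (u : Z * Z) : C :=
  (fst w * RtoC (IZR (snd u)) - snd w * RtoC (IZR (fst u)))%C.

(* e^{2 pi i w} written out: e^{-2 pi Im w} (cos (2 pi Re w) + i sin (2 pi Re w)) *)
Definition e2pi (w : C) : C :=
  (exp (-2 * PI * Im w) * cos (2 * PI * Re w),
   exp (-2 * PI * Im w) * sin (2 * PI * Re w)).

Fixpoint prodC (f : nat -> C) (N : nat) : C :=
  match N with
  | O => RtoC 1
  | S N' => (prodC f N' * f N')%C
  end.

Definition qpoch_part (x q0 q1 : C) (N : nat) : C :=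
  prodC (fun j0 => prodC (fun j1 => (RtoC 1 - x * Cpow q0 j0 * Cpow q1 j1)%C) N) N.

(* the limit of the truncated products (the value of the infinite product
   prod_{j0,j1>=0} (1 - x q0^j0 q1^j1) when |q0|,|q1| < 1) *)
Definition qpoch_lim (x q0 q1 : C) : C :=
  epsilon (inhabits (RtoC 0))
    (fun L => filterlim (qpoch_part x q0 q1) eventually (locally L)).

(* (x | q0, q1)_infty, extended to all |q0|,|q1| <> 1 as in the paper
   (value 0 is junk when some |q_j| = 1, a case never used). *)
Definition qpoch (x q0 q1 : C) : C :=
  match Rlt_dec (Cmod q0) 1, Rlt_dec 1 (Cmod q0),
        Rlt_dec (Cmod q1) 1, Rlt_dec 1 (Cmod q1) with
  | left _, _, left _, _ => qpoch_lim x q0 q1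
  | _, left _, left _, _ => Cinv (qpoch_lim (Cinv q0 * x) (Cinv q0) q1)
  | left _, _, _, left _ => Cinv (qpoch_lim (Cinv q1 * x) q0 (Cinv q1))
  | _, left _, _, left _ => qpoch_lim (Cinv q0 * Cinv q1 * x) (Cinv q0) (Cinv q1)
  | _, _, _, _ => RtoC 0
  end.

(* (x | q0, q1)_infty is finite (not at a pole): in the cases defined by a
   reciprocal, the infinite product in the denominator is nonzero. *)
Definition qpoch_finite (x q0 q1 : C) : Prop :=
  (1 < Cmod q0 -> Cmod q1 < 1 -> qpoch_lim (Cinv q0 * x) (Cinv q0) q1 <> RtoC 0) /\
  (Cmod q0 < 1 -> 1 < Cmod q1 -> qpoch_lim (Cinv q1 * x) q0 (Cinv q1) <> RtoC 0).

Definition angleZ (a b : Z * Z) : R :=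
  let a1 := IZR (fst a) in let a2 := IZR (snd a) in
  let b1 := IZR (fst b) in let b2 := IZR (snd b) in
  acos ((a1 * b1 + a2 * b2) / (sqrt (a1 ^ 2 + a2 ^ 2) * sqrt (b1 ^ 2 + b2 ^ 2))).

From Stdlib Require Import Reals ZArith Lra Lia List Permutation ClassicalEpsilon.
From Coquelicot Require Import Coquelicot.
Open Scope R_scope.

(* Write [x = e2pi z], [e v = e2pi (w x v)] and [eps_i] for the sign of [Im (w x u_i)].
   Unfolding the reflection rules, the [i]-th factor is [P_i ^ (-eps_i eps_(i+1))], where
   [P_i] is the product of [1 - x e v] over the lattice points [v] of the unimodular cone
   with edges [eps_i u_i], [eps_(i+1) u_(i+1)] and apex [0], [u_(i+1)], [-u_i] or
   [u_(i+1) - u_i].  Counted with these signs, the cones cover every lattice point zero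
   times, except the origin, covered once: four times the indicator of a cone is a
   product of two differences of half-plane signs, and summed around the fan all that
   remains are sums [sum_i sgn (r x u_i) sgn (r x u_(i+1))], equal to [n - 3] because a
   fan going once around crosses each line through the origin exactly twice.
   So, truncated to a box [-R, R]^2, the signed product of the cone products is exactly
   [1 - x]; letting [R] grow gives the identity. *)

(** * Sign changes along a fan *)

Lemma up_of_bounds (x : R) (k : Z) : IZR k - 1 <= x -> x < IZR k -> up x = k.
Proof. intros H1 H2. symmetry. apply tech_up; lra. Qed.

Lemma up_div_2PI (x : R) (k : Z) :
  2 * PI * (IZR k - 1) <= x -> x < 2 * PI * IZR k -> up (x / (2 * PI)) = k.
Proof.
  intros H1 H2. pose proof PI_RGT_0. apply up_of_bounds.
  - apply Rmult_le_reg_r with (2 * PI); [lra|]. field_simplify; lra.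
  - apply Rmult_lt_reg_r with (2 * PI); [lra|]. field_simplify; lra.
Qed.

Lemma up_plus_IZR (x : R) (m : Z) : up (x + IZR m) = (up x + m)%Z.
Proof. destruct (archimed x). apply up_of_bounds; rewrite plus_IZR; lra. Qed.

Lemma sin_period_Z (x : R) (m : Z) : sin (x + 2 * PI * IZR m) = sin x.
Proof.
  destruct (Z_le_gt_dec 0 m) as [Hm|Hm].
  - rewrite <- (Z2Nat.id m), <- INR_IZR_INZ by lia.
    rewrite <- (sin_period x (Z.to_nat m)). f_equal. ring.
  - replace m with (- Z.of_nat (Z.to_nat (- m)))%Z by lia.
    rewrite opp_IZR, <- INR_IZR_INZ.
    rewrite <- (sin_period (x + 2 * PI * - INR (Z.to_nat (- m))) (Z.to_nat (- m))).
    f_equal. ring.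
Qed.

Definition sgn (x : R) : Z := if Rlt_dec 0 x then 1%Z else (-1)%Z.

Lemma sgn_pos x : 0 < x -> sgn x = 1%Z.
Proof. unfold sgn; destruct (Rlt_dec 0 x); [auto | lra]. Qed.

Lemma sgn_nonpos x : x <= 0 -> sgn x = (-1)%Z.
Proof. unfold sgn; destruct (Rlt_dec 0 x); [lra | auto]. Qed.

Lemma sgn_scale x k : 0 < k -> sgn (x * k) = sgn x.
Proof.
  intros Hk. destruct (Rlt_le_dec 0 x).
  - rewrite (sgn_pos x), (sgn_pos (x * k)); auto. nra.
  - rewrite (sgn_nonpos x), (sgn_nonpos (x * k)); auto. nra.
Qed.

(* Up to an additive constant, the number of multiples of [PI] crossed up to [L]:
   odd multiples [k PI <= L] and even multiples [k PI < L].  It jumps exactly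
   where [sgn (sin L)] flips, [sgn 0 = -1] being the reason for the asymmetry. *)
Definition crossings (L : R) : Z := (up ((L - PI) / (2 * PI)) - up (- L / (2 * PI)))%Z.

Lemma crossings_plus_2PI_mult (L : R) (m : Z) :
  crossings (L + 2 * PI * IZR m) = (crossings L + 2 * m)%Z.
Proof.
  unfold crossings. pose proof PI_RGT_0.
  replace ((L + 2 * PI * IZR m - PI) / (2 * PI)) with ((L - PI) / (2 * PI) + IZR m)
    by (field; lra).
  replace (- (L + 2 * PI * IZR m) / (2 * PI)) with (- L / (2 * PI) + IZR (- m))
    by (rewrite opp_IZR; field; lra).
  rewrite !up_plus_IZR. lia.
Qed.

Lemma crossings_plus_2PI (L : R) : crossings (L + 2 * PI) = (crossings L + 2)%Z.
Proof.
  rewrite <- (Rmult_1_r (2 * PI)) at 1.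
  apply (crossings_plus_2PI_mult L 1).
Qed.

Lemma crossings_0 : crossings 0 = (-1)%Z.
Proof.
  pose proof PI_RGT_0. unfold crossings.
  rewrite (up_div_2PI (0 - PI) 0), (up_div_2PI (- 0) 1); simpl; try lia; lra.
Qed.

Lemma crossings_upper_half (t : R) : 0 < t < PI -> crossings t = 0%Z.
Proof.
  intros. pose proof PI_RGT_0. unfold crossings.
  rewrite (up_div_2PI (t - PI) 0), (up_div_2PI (- t) 0); simpl; try lia; lra.
Qed.

Lemma crossings_lower_half (t : R) : PI <= t <= 2 * PI -> crossings t = 1%Z.
Proof.
  intros. pose proof PI_RGT_0. unfold crossings.
  destruct (Req_dec t (2 * PI)) as [->|].
  - rewrite (up_div_2PI (2 * PI - PI) 1), (up_div_2PI (- (2 * PI)) 0); simpl; try lia; lra.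
  - rewrite (up_div_2PI (t - PI) 1), (up_div_2PI (- t) 0); simpl; try lia; lra.
Qed.

Lemma sgn_sin_upper_half (t : R) : 0 < t < PI -> sgn (sin t) = 1%Z.
Proof. intros. apply sgn_pos, sin_gt_0; lra. Qed.

Lemma sgn_sin_lower_half (t : R) : PI <= t <= 2 * PI -> sgn (sin t) = (-1)%Z.
Proof. intros. apply sgn_nonpos, sin_le_0; lra. Qed.

Lemma sgn_sin_turn_reduced (t d : R) : 0 <= t < 2 * PI -> 0 < d < PI ->
  (sgn (sin t) * sgn (sin (t + d)) = 1 - 2 * (crossings (t + d) - crossings t))%Z.
Proof.
  intros Ht Hd. pose proof PI_RGT_0.
  assert (Hnext : 2 * PI < t + d -> t + d < 3 * PI ->
            crossings (t + d) = 2%Z /\ sgn (sin (t + d)) = 1%Z).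
  { intros. replace (t + d) with ((t + d - 2 * PI) + 2 * PI * IZR 1) by (simpl; ring).
    rewrite crossings_plus_2PI_mult, sin_period_Z.
    rewrite crossings_upper_half, sgn_sin_upper_half by lra. auto. }
  destruct Ht as [[Ht0 | <-] Ht2pi].
  2:{ rewrite Rplus_0_l, sin_0, crossings_0, (sgn_nonpos 0) by lra.
    rewrite (crossings_upper_half d), (sgn_sin_upper_half d) by lra. lia. }
  destruct (Rlt_le_dec t PI).
  - rewrite (crossings_upper_half t), (sgn_sin_upper_half t) by lra.
    destruct (Rlt_le_dec (t + d) PI).
    + rewrite (crossings_upper_half (t + d)), (sgn_sin_upper_half (t + d)) by lra. lia.
    + rewrite (crossings_lower_half (t + d)), (sgn_sin_lower_half (t + d)) by lra. lia.
  - rewrite (crossings_lower_half t), (sgn_sin_lower_half t) by lra.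
    destruct (Rle_lt_dec (t + d) (2 * PI)).
    + rewrite (crossings_lower_half (t + d)), (sgn_sin_lower_half (t + d)) by lra. lia.
    + destruct Hnext as [-> ->]; [lra | lra | lia].
Qed.

Lemma sgn_sin_turn (L d : R) : 0 < d < PI ->
  (sgn (sin L) * sgn (sin (L + d)) = 1 - 2 * (crossings (L + d) - crossings L))%Z.
Proof.
  intros Hd. pose proof PI_RGT_0.
  set (m := (up (L / (2 * PI)) - 1)%Z).
  assert (Hm : IZR m <= L / (2 * PI) < IZR m + 1).
  { destruct (archimed (L / (2 * PI))). unfold m. rewrite minus_IZR. simpl. lra. }
  set (t := L - 2 * PI * IZR m).
  assert (Ht : 0 <= t < 2 * PI).
  { unfold t. destruct Hm as [Hm1 Hm2].
    apply Rmult_le_compat_r with (r := 2 * PI) in Hm1; [|lra].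
    apply Rmult_lt_compat_r with (r := 2 * PI) in Hm2; [|lra].
    field_simplify in Hm1; field_simplify in Hm2; lra. }
  replace L with (t + 2 * PI * IZR m) by (unfold t; ring).
  replace (t + 2 * PI * IZR m + d) with ((t + d) + 2 * PI * IZR m) by ring.
  rewrite !crossings_plus_2PI_mult, !sin_period_Z.
  pose proof (sgn_sin_turn_reduced t d Ht Hd). lia.
Qed.

Definition vx (u : Z * Z) : R := IZR (fst u).
Definition vy (u : Z * Z) : R := IZR (snd u).
Definition vnorm (u : Z * Z) : R := sqrt (vx u ^ 2 + vy u ^ 2).
Definition dotZ (a b : Z * Z) : R := vx a * vx b + vy a * vy b.
Definition dotRZ (r : R * R) (u : Z * Z) : R := fst r * vx u + snd r * vy u.
Definition crossRZ (r : R * R) (u : Z * Z) : R := fst r * vy u - snd r * vx u.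

Lemma crossZ_IZR (a b : Z * Z) : IZR (crossZ a b) = vx a * vy b - vy a * vx b.
Proof. unfold crossZ, vx, vy. rewrite minus_IZR, !mult_IZR. ring. Qed.

Lemma vnorm_sqr (u : Z * Z) : vnorm u * vnorm u = vx u ^ 2 + vy u ^ 2.
Proof. apply sqrt_sqrt. nra. Qed.

Lemma angleZ_unimodular (a b : Z * Z) : crossZ a b = 1%Z ->
  0 < vnorm a /\ 0 < vnorm b /\ 0 < angleZ a b < PI /\
  cos (angleZ a b) * vnorm a * vnorm b = dotZ a b /\
  sin (angleZ a b) * vnorm a * vnorm b = 1.
Proof.
  intros Hab. apply (f_equal IZR) in Hab. rewrite crossZ_IZR in Hab.
  assert (Hlag : (vnorm a * vnorm b) ^ 2 = dotZ a b ^ 2 + 1).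
  { replace ((vnorm a * vnorm b) ^ 2) with ((vnorm a * vnorm a) * (vnorm b * vnorm b)) by ring.
    rewrite !vnorm_sqr, <- (pow1 2), <- Hab. unfold dotZ. ring. }
  assert (Hpos : forall u, 0 <= vnorm u) by (intros; apply sqrt_pos).
  pose proof (Hpos a) as Hpa. pose proof (Hpos b) as Hpb.
  assert (Hab0 : 0 < vnorm a * vnorm b).
  { destruct (Rmult_le_pos _ _ Hpa Hpb) as [|E]; auto. rewrite <- E in Hlag. nra. }
  assert (Ha : 0 < vnorm a) by nra.
  assert (Hb : 0 < vnorm b) by nra.
  set (c := dotZ a b / (vnorm a * vnorm b)).
  assert (Hc2 : 1 - c ^ 2 = (1 / (vnorm a * vnorm b)) ^ 2).
  { unfold c, Rdiv. rewrite !Rpow_mult_distr, pow_inv, Hlag. field. nra. }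
  assert (Hc : -1 < c < 1).
  { assert (0 < (1 / (vnorm a * vnorm b)) ^ 2) by (apply pow_lt, Rdiv_lt_0_compat; lra).
    split; nra. }
  change (angleZ a b) with (acos c).
  repeat split; auto.
  - apply acos_bound_lt; auto.
  - apply acos_bound_lt; auto.
  - rewrite cos_acos by lra. unfold c. field. lra.
  - rewrite sin_acos by lra.
    replace (1 - c²) with ((1 / (vnorm a * vnorm b)) ^ 2) by (rewrite <- Hc2; unfold Rsqr; ring).
    rewrite sqrt_pow2 by (left; apply Rdiv_lt_0_compat; lra). field. lra.
Qed.

Lemma cos_sin_surjective (p q : R) : p ^ 2 + q ^ 2 = 1 -> exists L, cos L = p /\ sin L = q.
Proof.
  intros H.
  assert (Hp : -1 <= p <= 1) by (split; nra).
  assert (Hs : sqrt (1 - p²) = Rabs q).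
  { rewrite <- sqrt_Rsqr_abs. f_equal. unfold Rsqr. lra. }
  destruct (Rle_dec 0 q).
  - exists (acos p). rewrite cos_acos, sin_acos, Hs, Rabs_pos_eq by auto. auto.
  - exists (- acos p). rewrite cos_neg, sin_neg, cos_acos, sin_acos, Hs, Rabs_left by (auto; lra).
    split; [auto | ring].
Qed.

(* Turning by [angleZ a b] carries [a] to the direction of [b] (as [a x b = 1]),
   so polar coordinates of [r] relative to [a] turn into those relative to [b]. *)
Lemma polar_turn (r : R * R) (a b : Z * Z) (L nr : R) : crossZ a b = 1%Z ->
  cos L * nr * vnorm a = dotRZ r a -> sin L * nr * vnorm a = crossRZ r a ->
  cos (L + angleZ a b) * nr * vnorm b = dotRZ r b /\
  sin (L + angleZ a b) * nr * vnorm b = crossRZ r b.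
Proof.
  intros Hab Hc Hs.
  destruct (angleZ_unimodular a b Hab) as (Ha & _ & _ & Hcos & Hsin).
  apply (f_equal IZR) in Hab. rewrite crossZ_IZR in Hab.
  pose proof (vnorm_sqr a) as Ea.
  rewrite cos_plus, sin_plus.
  destruct r as [r1 r2]. unfold dotRZ, crossRZ, dotZ in *; cbn [fst snd] in *.
  split; apply Rmult_eq_reg_r with (vnorm a * vnorm a); try nra.
  - transitivity ((cos L * nr * vnorm a) * (cos (angleZ a b) * vnorm a * vnorm b)
                  - (sin L * nr * vnorm a) * (sin (angleZ a b) * vnorm a * vnorm b)); [ring|].
    rewrite Hc, Hs, Hcos, Hsin, Ea, <- Hab at 1. ring.
  - transitivity ((sin L * nr * vnorm a) * (cos (angleZ a b) * vnorm a * vnorm b)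
                  + (cos L * nr * vnorm a) * (sin (angleZ a b) * vnorm a * vnorm b)); [ring|].
    rewrite Hc, Hs, Hcos, Hsin, Ea, <- Hab at 1. ring.
Qed.

Fixpoint sumR (f : nat -> R) (n : nat) : R :=
  match n with O => 0 | S k => sumR f k + f k end.

Lemma sumR_sum_f_R0 (f : nat -> R) n : sumR f (S n) = sum_f_R0 f n.
Proof. induction n; simpl in *; [ring|]. rewrite <- IHn. ring. Qed.

Lemma fan_polar_angles (n : nat) (u : nat -> Z * Z) (r : R * R) :
  (forall i, (i <= n)%nat -> crossZ (u i) (u (S i)) = 1%Z) -> r <> (0, 0) ->
  exists L0, forall i, (i <= S n)%nat ->
    sgn (crossRZ r (u i)) = sgn (sin (L0 + sumR (fun k => angleZ (u k) (u (S k))) i)).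
Proof.
  intros Hcr Hr. destruct r as [r1 r2].
  set (nr := sqrt (r1 ^ 2 + r2 ^ 2)).
  assert (Hr0 : 0 < r1 ^ 2 + r2 ^ 2).
  { destruct (Req_dec r1 0), (Req_dec r2 0); [subst; congruence | nra ..]. }
  assert (Hnr : 0 < nr) by (apply sqrt_lt_R0; auto).
  assert (Enr : nr * nr = r1 ^ 2 + r2 ^ 2) by (apply sqrt_sqrt; lra).
  assert (Hnu : forall i, (i <= S n)%nat -> 0 < vnorm (u i)).
  { intros [|i] Hi; [apply (angleZ_unimodular _ _ (Hcr O ltac:(lia)))|].
    apply (angleZ_unimodular _ _ (Hcr i ltac:(lia))). }
  pose proof (Hnu O ltac:(lia)) as Hu0. pose proof (vnorm_sqr (u O)) as Eu0.
  destruct (cos_sin_surjective (dotRZ (r1, r2) (u O) / (nr * vnorm (u O)))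
                               (crossRZ (r1, r2) (u O) / (nr * vnorm (u O)))) as [L0 [HL0c HL0s]].
  { unfold dotRZ, crossRZ, Rdiv; cbn [fst snd]. rewrite !Rpow_mult_distr, pow_inv.
    replace ((nr * vnorm (u O)) ^ 2) with ((nr * nr) * (vnorm (u O) * vnorm (u O))) by ring.
    rewrite Enr, Eu0. field. nra. }
  exists L0.
  set (L := fun i => L0 + sumR (fun k => angleZ (u k) (u (S k))) i).
  assert (Hpolar : forall i, (i <= S n)%nat ->
     cos (L i) * nr * vnorm (u i) = dotRZ (r1, r2) (u i) /\
     sin (L i) * nr * vnorm (u i) = crossRZ (r1, r2) (u i)).
  { induction i as [|i IH]; intros Hi.
    - unfold L; simpl. rewrite Rplus_0_r, HL0c, HL0s. split; field; split; lra.
    - destruct (IH ltac:(lia)) as [IHc IHs].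
      replace (L (S i)) with (L i + angleZ (u i) (u (S i))) by (unfold L; simpl; ring).
      apply polar_turn; [apply Hcr; lia | exact IHc | exact IHs]. }
  intros i Hi. fold (L i). rewrite <- (proj2 (Hpolar i Hi)), Rmult_assoc.
  apply sgn_scale. pose proof (Hnu i Hi). nra.
Qed.

(* Unlike [sumR f n], [sumZ f n] has [n + 1] terms, as [sum_f_R0 f n]. *)
Fixpoint sumZ (f : nat -> Z) (n : nat) : Z :=
  match n with O => f O | S k => (sumZ f k + f (S k))%Z end.

Lemma sumZ_ext (f g : nat -> Z) n :
  (forall i, (i <= n)%nat -> f i = g i) -> sumZ f n = sumZ g n.
Proof.
  induction n; intros H; simpl; [apply H; lia|].
  rewrite IHn by (intros; apply H; lia). rewrite (H (S n)) by lia. reflexivity.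
Qed.

Lemma sumZ_telescope (g : nat -> Z) n : sumZ (fun i => (g (S i) - g i)%Z) n = (g (S n) - g O)%Z.
Proof. induction n; simpl; [lia|]. rewrite IHn. lia. Qed.

Lemma sumZ_add (f g : nat -> Z) n : sumZ (fun i => (f i + g i)%Z) n = (sumZ f n + sumZ g n)%Z.
Proof. induction n; simpl; lia. Qed.

Lemma sumZ_mul_l (f : nat -> Z) (c : Z) n : sumZ (fun i => (c * f i)%Z) n = (c * sumZ f n)%Z.
Proof. induction n; simpl; [lia|]. rewrite IHn. ring. Qed.

Lemma sumZ_const (c : Z) n : sumZ (fun _ => c) n = (Z.of_nat (S n) * c)%Z.
Proof.
  induction n; simpl sumZ; [symmetry; apply Z.mul_1_l|].
  rewrite IHn, (Nat2Z.inj_succ (S n)). unfold Z.succ. ring.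
Qed.

(* The sign of [r x u_i] changes exactly twice as [u_i] goes once around. *)
Lemma sign_changes_around_fan (n : nat) (u : nat -> Z * Z) (r : R * R) :
  u (S n) = u O ->
  (forall i, (i <= n)%nat -> crossZ (u i) (u (S i)) = 1%Z) ->
  sum_f_R0 (fun i => angleZ (u i) (u (S i))) n = 2 * PI ->
  r <> (0, 0) ->
  sumZ (fun i => (sgn (crossRZ r (u i)) * sgn (crossRZ r (u (S i))))%Z) n = (Z.of_nat n - 3)%Z.
Proof.
  intros Hper Hcr Hsum Hr.
  destruct (fan_polar_angles n u r Hcr Hr) as [L0 HL].
  set (L := fun i => L0 + sumR (fun k => angleZ (u k) (u (S k))) i).
  rewrite (sumZ_ext _ (fun i => (1 + (-2) * (crossings (L (S i)) - crossings (L i)))%Z)).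
  - rewrite sumZ_add, sumZ_const, sumZ_mul_l, (sumZ_telescope (fun k => crossings (L k))).
    replace (L (S n)) with (L O + 2 * PI) by (unfold L; rewrite sumR_sum_f_R0, Hsum; simpl; ring).
    rewrite crossings_plus_2PI, Nat2Z.inj_succ. lia.
  - intros i Hi. rewrite !HL by lia. fold (L i) (L (S i)).
    replace (L (S i)) with (L i + angleZ (u i) (u (S i))) by (unfold L; simpl; ring).
    rewrite sgn_sin_turn by apply (angleZ_unimodular _ _ (Hcr i Hi)). lia.
Qed.

(** * Signed lattice cones *)

Section LatticeCones.
Local Open Scope Z_scope.

Definition vadd (a b : Z * Z) : Z * Z := (fst a + fst b, snd a + snd b).
Definition vopp (a : Z * Z) : Z * Z := (- fst a, - snd a).
Definition vsub (a b : Z * Z) : Z * Z := vadd a (vopp b).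
Definition vscale (k : Z) (a : Z * Z) : Z * Z := (k * fst a, k * snd a).
Definition is_origin (v : Z * Z) : bool := (fst v =? 0) && (snd v =? 0).

Definition pm (b : bool) : Z := if b then 1 else -1.
Definition sgnZ (k : Z) : Z := if 0 <? k then 1 else -1.

(* Membership in the lattice cone [c + N d0 + N d1] of a unimodular pair
   [d0 x d1 = +-1]: by Cramer's rule, the coordinates of [v - c] in the basis
   [d0, d1] are [d0 x d1] times the cross products below. *)
Definition in_cone (c d0 d1 v : Z * Z) : bool :=
  (0 <=? crossZ d0 d1 * crossZ (vsub v c) d1) && (0 <=? crossZ d0 d1 * crossZ d0 (vsub v c)).

Definition cone_edge (e : bool) (a : Z * Z) : Z * Z := if e then a else vopp a.
Definition cone_apex (e0 e1 : bool) (a b : Z * Z) : Z * Z :=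
  vadd (if e0 then (0, 0) else vopp a) (if e1 then b else (0, 0)).

Lemma cone_edge_unimodular (e0 e1 : bool) (a b : Z * Z) : crossZ a b = 1 ->
  crossZ (cone_edge e0 a) (cone_edge e1 b) = pm (negb (xorb e0 e1)).
Proof. destruct a, b, e0, e1; unfold cone_edge, vopp, pm, crossZ; simpl; lia. Qed.

(* The cone is the intersection of two lattice half-planes, each indicator
   being [(1 +- sgnZ)/2]; hence the factorisation. *)
Lemma cone_indicator (a b v : Z * Z) (e0 e1 : bool) : crossZ a b = 1 ->
  4 * pm (xorb e0 e1) *
    (if in_cone (cone_apex e0 e1 a b) (cone_edge e0 a) (cone_edge e1 b) v then 1 else 0)
  = (sgnZ (crossZ b v) - pm e0) * (sgnZ (crossZ a v) + pm e1).
Proof.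
  intros Hab. unfold in_cone. rewrite cone_edge_unimodular by auto.
  destruct a as [a1 a2], b as [b1 b2], v as [v1 v2].
  unfold sgnZ, cone_apex, cone_edge, vsub, vadd, vopp, pm, crossZ in *; cbn [fst snd] in *.
  destruct e0, e1; cbn [xorb negb andb] in *;
  repeat match goal with
  | |- context [Z.leb ?x ?y] => destruct (Z.leb_spec x y)
  | |- context [Z.ltb ?x ?y] => destruct (Z.ltb_spec x y)
  end; cbn [andb fst snd] in *; lia.
Qed.

End LatticeCones.

Lemma sgn_IZR (k : Z) : sgn (IZR k) = sgnZ k.
Proof.
  unfold sgn, sgnZ. destruct (Rlt_dec 0 (IZR k)) as [H|H], (Z.ltb_spec 0 k) as [H'|H']; auto.
  - apply lt_IZR in H. lia.
  - exfalso. apply H, IZR_lt. auto.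
Qed.

Definition toR (v : Z * Z) : R * R := (vx v, vy v).

Lemma sgnZ_crossZ (a v : Z * Z) : sgnZ (crossZ a v) = sgn (crossRZ (toR (vopp v)) a).
Proof.
  rewrite <- sgn_IZR, crossZ_IZR. f_equal. unfold crossRZ, toR, vopp, vx, vy. simpl.
  rewrite !opp_IZR. ring.
Qed.

Definition im_cross (w : C * C) (u : Z * Z) : R := Im (crossCZ w u).
Definition im_pos (w : C * C) (u : Z * Z) : bool :=
  if Rlt_dec 0 (im_cross w u) then true else false.
Definition Im2 (w : C * C) : R * R := (Im (fst w), Im (snd w)).

Lemma im_cross_crossRZ (w : C * C) (u : Z * Z) : im_cross w u = crossRZ (Im2 w) u.
Proof.
  destruct w as [[a b] [c d]]. unfold im_cross, crossCZ, crossRZ, Im2, vx, vy.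
  unfold Im, RtoC, Cminus, Cmult, Copp, Cplus; simpl. ring.
Qed.

Lemma pm_im_pos (w : C * C) (a : Z * Z) : pm (im_pos w a) = sgn (crossRZ (Im2 w) a).
Proof. unfold pm, im_pos, sgn. rewrite im_cross_crossRZ. destruct Rlt_dec; auto. Qed.

(* The cone attached to the [i]-th factor: apex and edges [+- u_i], [+- u_(i+1)]
   are chosen according to the signs of [Im (w x u_i)] and [Im (w x u_(i+1))]. *)
Definition fan_apex (w : C * C) (a b : Z * Z) : Z * Z := cone_apex (im_pos w a) (im_pos w b) a b.
Definition fan_edge (w : C * C) (a : Z * Z) : Z * Z := cone_edge (im_pos w a) a.
Definition fan_cone (w : C * C) (a b v : Z * Z) : bool :=
  in_cone (fan_apex w a b) (fan_edge w a) (fan_edge w b) v.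

Definition fan_sign (w : C * C) (a b : Z * Z) : bool := xorb (im_pos w a) (im_pos w b).

Lemma is_origin_iff (v : Z * Z) : is_origin v = true <-> v = (0%Z, 0%Z).
Proof.
  destruct v as [v1 v2]. unfold is_origin. simpl. rewrite Bool.andb_true_iff, !Z.eqb_eq.
  split; [intros [-> ->]; auto | intros E; injection E; auto].
Qed.

Lemma sign_changes_im_pos (n : nat) (u : nat -> Z * Z) (w : C * C) :
  u (S n) = u O ->
  (forall i, (i <= n)%nat -> crossZ (u i) (u (S i)) = 1%Z) ->
  sum_f_R0 (fun i => angleZ (u i) (u (S i))) n = 2 * PI ->
  im_cross w (u O) <> 0 ->
  sumZ (fun i => (pm (im_pos w (u i)) * pm (im_pos w (u (S i))))%Z) n = (Z.of_nat n - 3)%Z.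
Proof.
  intros Hper Hcr Hsum Hw.
  rewrite (sumZ_ext _ (fun i => (sgn (crossRZ (Im2 w) (u i)) * sgn (crossRZ (Im2 w) (u (S i))))%Z))
    by (intros; rewrite !pm_im_pos; auto).
  apply sign_changes_around_fan; auto.
  intros E. apply Hw. rewrite im_cross_crossRZ, E. unfold crossRZ. simpl. ring.
Qed.

(* With the convention [sgnZ 0 = -1], the origin is the one point seen with
   constant sign from every [u_i]. *)
Lemma sign_changes_sgnZ (n : nat) (u : nat -> Z * Z) (v : Z * Z) :
  u (S n) = u O ->
  (forall i, (i <= n)%nat -> crossZ (u i) (u (S i)) = 1%Z) ->
  sum_f_R0 (fun i => angleZ (u i) (u (S i))) n = 2 * PI ->
  sumZ (fun i => (sgnZ (crossZ (u i) v) * sgnZ (crossZ (u (S i)) v))%Z) n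
  = (if is_origin v then Z.of_nat n + 1 else Z.of_nat n - 3)%Z.
Proof.
  intros Hper Hcr Hsum. destruct (is_origin v) eqn:Ev.
  - apply is_origin_iff in Ev. subst v.
    rewrite (sumZ_ext _ (fun _ => 1%Z)), sumZ_const, Nat2Z.inj_succ
      by (intros; unfold sgnZ, crossZ; rewrite !Z.mul_0_r; reflexivity).
    lia.
  - rewrite (sumZ_ext _ (fun i => (sgn (crossRZ (toR (vopp v)) (u i)) *
                                  sgn (crossRZ (toR (vopp v)) (u (S i))))%Z))
      by (intros; rewrite !sgnZ_crossZ; auto).
    apply sign_changes_around_fan; auto.
    destruct v as [v1 v2]. unfold toR, vopp, vx, vy. simpl. rewrite !opp_IZR. intros E.
    injection E; intros E2 E1.
    assert (v1 = 0%Z) by (apply eq_IZR; lra). assert (v2 = 0%Z) by (apply eq_IZR; lra).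
    subst. discriminate.
Qed.

Lemma signed_cone_count (n : nat) (u : nat -> Z * Z) (w : C * C) (v : Z * Z) :
  u (S n) = u O ->
  (forall i, (i <= n)%nat -> crossZ (u i) (u (S i)) = 1%Z) ->
  sum_f_R0 (fun i => angleZ (u i) (u (S i))) n = 2 * PI ->
  im_cross w (u O) <> 0 ->
  sumZ (fun i => (pm (fan_sign w (u i) (u (S i))) *
                  (if fan_cone w (u i) (u (S i)) v then 1 else 0))%Z) n
  = (if is_origin v then 1 else 0)%Z.
Proof.
  intros Hper Hcr Hsum Hw.
  set (A := fun i => sgnZ (crossZ (u i) v)).
  set (p := fun i => pm (im_pos w (u i))).
  assert (H4 : (4 * sumZ (fun i => (pm (fan_sign w (u i) (u (S i))) *
                 (if fan_cone w (u i) (u (S i)) v then 1 else 0))%Z) n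
          = sumZ (fun i => A i * A (S i)) n
            + sumZ (fun i => A (S i) * p (S i) - A i * p i) n
            - sumZ (fun i => p i * p (S i)) n)%Z).
  { rewrite <- sumZ_mul_l,
      (sumZ_ext _ (fun i => (A i * A (S i) + (A (S i) * p (S i) - A i * p i)
                             + (-1) * (p i * p (S i)))%Z)).
    - rewrite !sumZ_add, sumZ_mul_l. lia.
    - intros i Hi. unfold fan_sign, fan_cone, fan_apex, fan_edge.
      rewrite Z.mul_assoc, cone_indicator by auto. unfold A, p. ring. }
  rewrite (sumZ_telescope (fun i => (A i * p i)%Z)) in H4.
  unfold A, p in H4. rewrite Hper, Z.sub_diag, sign_changes_im_pos, sign_changes_sgnZ in H4 by auto.
  destruct (is_origin v); lia.
Qed.

(** * Convergence of the double q-products *)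

Lemma Cmod_lt_ball (x y : C) (eps : R) : Cmod (x - y) < eps -> ball y eps x.
Proof. apply (norm_compat1 (K := C_AbsRing) (V := C_NormedModule)). Qed.

Lemma ball_Cmod_lt (x y : C) (eps : posreal) : ball y eps x -> Cmod (x - y) < 2 * eps.
Proof.
  intros H. pose proof (C_NormedModule_mixin_compat2 y x eps H) as Hn.
  change (Cmod (x - y) < sqrt 2 * eps) in Hn.
  assert (sqrt 2 < 2) by (rewrite <- (sqrt_pow2 2) at 2 by lra; apply sqrt_lt_1_alt; lra).
  pose proof (cond_pos eps). nra.
Qed.

Lemma filterlim_seq_Cmod (f : nat -> C) (l : C) :
  filterlim f eventually (locally l) <->
  forall eps, 0 < eps -> exists N, forall n, (N <= n)%nat -> Cmod (f n - l) < eps.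
Proof.
  split.
  - intros H eps Heps.
    destruct (proj1 (filterlim_locally f l) H (mkposreal (eps / 2) ltac:(lra))) as [N HN].
    exists N. intros n Hn. pose proof (ball_Cmod_lt _ _ _ (HN n Hn)). simpl in *. lra.
  - intros H. apply filterlim_locally. intros eps.
    destruct (H eps (cond_pos eps)) as [N HN].
    exists N. intros n Hn. apply Cmod_lt_ball, HN, Hn.
Qed.

Lemma filterlim_seq_C_unique (f : nat -> C) (l1 l2 : C) :
  filterlim f eventually (locally l1) -> filterlim f eventually (locally l2) -> l1 = l2.
Proof.
  rewrite !filterlim_seq_Cmod. intros H1 H2.
  destruct (Req_dec (Cmod (l1 - l2)) 0) as [E|E].
  - apply Cmod_eq_0 in E. replace l1 with ((l1 - l2) + l2)%C by ring. rewrite E. ring.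
  - pose proof (Cmod_ge_0 (l1 - l2)).
    destruct (H1 (Cmod (l1 - l2) / 2) ltac:(lra)) as [N1 HN1].
    destruct (H2 (Cmod (l1 - l2) / 2) ltac:(lra)) as [N2 HN2].
    specialize (HN1 (Nat.max N1 N2) ltac:(lia)). specialize (HN2 (Nat.max N1 N2) ltac:(lia)).
    pose proof (Cmod_triangle (f (Nat.max N1 N2) - l2) (l1 - f (Nat.max N1 N2))).
    replace (f (Nat.max N1 N2) - l2 + (l1 - f (Nat.max N1 N2)))%C with (l1 - l2)%C in * by ring.
    replace (l1 - f (Nat.max N1 N2))%C with (- (f (Nat.max N1 N2) - l1))%C in * by ring.
    rewrite Cmod_opp in *. lra.
Qed.

Lemma Cauchy_seq_C_converges (f : nat -> C) :
  (forall eps, 0 < eps -> exists N, forall m n, (N <= m)%nat -> (N <= n)%nat ->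
     Cmod (f m - f n) < eps) ->
  exists l : C, filterlim f eventually (locally l).
Proof.
  intros H.
  apply (proj1 (filterlim_locally_cauchy (U := C_CompleteNormedModule) (F := eventually) f)).
  intros eps. destruct (H eps (cond_pos eps)) as [N HN].
  exists (fun n => (N <= n)%nat). split; [exists N; auto|].
  intros m n Hm Hn. apply Cmod_lt_ball, HN; auto.
Qed.

Lemma Cmod_sub_sym (x y : C) : Cmod (x - y) = Cmod (y - x).
Proof. replace (x - y)%C with (- (y - x))%C by ring. apply Cmod_opp. Qed.

Lemma Cmod_sub_triangle (x y z : C) : Cmod (x - z) <= Cmod (x - y) + Cmod (y - z).
Proof. replace (x - z)%C with ((x - y) + (y - z))%C by ring. apply Cmod_triangle. Qed.

Lemma Cmod_Cpow (a : C) n : Cmod (Cpow a n) = Cmod a ^ n.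
Proof. induction n; simpl; [apply Cmod_1|]. rewrite Cmod_mult, IHn. auto. Qed.

Lemma prodC_ext (f g : nat -> C) K :
  (forall j, (j < K)%nat -> f j = g j) -> prodC f K = prodC g K.
Proof.
  induction K; intros H; simpl; auto.
  rewrite IHK by (intros; apply H; lia). rewrite (H K) by lia. reflexivity.
Qed.

Lemma prodC_mul (f g : nat -> C) K : prodC (fun j => f j * g j)%C K = (prodC f K * prodC g K)%C.
Proof. induction K; simpl; [ring|]. rewrite IHK. ring. Qed.

Lemma prodC_1 (f : nat -> C) K : (forall j, (j < K)%nat -> f j = RtoC 1) -> prodC f K = RtoC 1.
Proof.
  induction K; intros H; simpl; auto.
  rewrite IHK by (intros; apply H; lia). rewrite H by lia. ring.
Qed.

Lemma prodC_stationary (f : nat -> C) K0 K :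
  (forall j, (K0 <= j)%nat -> f j = RtoC 1) -> (K0 <= K)%nat -> prodC f K = prodC f K0.
Proof. intros H HK. induction HK; auto. simpl. rewrite IHHK, H by lia. ring. Qed.

Lemma prodC_neq_0 (f : nat -> C) K :
  (forall j, (j < K)%nat -> f j <> RtoC 0) -> prodC f K <> RtoC 0.
Proof.
  induction K; intros H; simpl.
  - apply C1_nz.
  - apply Cmult_neq_0; [apply IHK; auto | apply H; lia].
Qed.

Lemma filterlim_seq_Cmult (f g : nat -> C) (l m : C) :
  filterlim f eventually (locally l) -> filterlim g eventually (locally m) ->
  filterlim (fun n => f n * g n)%C eventually (locally (l * m)%C).
Proof.
  rewrite !filterlim_seq_Cmod. intros Hf Hg eps Heps.
  pose proof (Cmod_ge_0 l). pose proof (Cmod_ge_0 m).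
  set (e1 := Rmin 1 (eps / (2 * (Cmod m + 1)))).
  set (e2 := eps / (2 * (Cmod l + 2))).
  assert (He1 : 0 < e1) by (apply Rmin_pos; [lra | apply Rdiv_lt_0_compat; lra]).
  assert (He1_1 : e1 <= 1) by apply Rmin_l.
  assert (He1_m : e1 <= eps / (2 * (Cmod m + 1))) by apply Rmin_r.
  assert (He2 : 0 < e2) by (apply Rdiv_lt_0_compat; lra).
  destruct (Hf e1 He1) as [N1 HN1], (Hg e2 He2) as [N2 HN2].
  exists (Nat.max N1 N2). intros n Hn.
  specialize (HN1 n ltac:(lia)). specialize (HN2 n ltac:(lia)).
  replace (f n * g n - l * m)%C with (f n * (g n - m) + m * (f n - l))%C by ring.
  eapply Rle_lt_trans; [apply Cmod_triangle|]. rewrite !Cmod_mult.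
  assert (Hfn : Cmod (f n) <= Cmod l + 1).
  { replace (f n) with ((f n - l) + l)%C by ring.
    pose proof (Cmod_triangle (f n - l) l). lra. }
  assert (A1 : Cmod (f n) * Cmod (g n - m) <= (Cmod l + 1) * e2)
    by (apply Rmult_le_compat; auto using Cmod_ge_0; lra).
  assert (A2 : Cmod m * Cmod (f n - l) <= Cmod m * (eps / (2 * (Cmod m + 1)))).
  { apply Rmult_le_compat_l; auto. lra. }
  assert ((Cmod l + 1) * e2 < eps / 2)
    by (unfold e2; apply Rmult_lt_reg_r with (2 * (Cmod l + 2)); [lra | field_simplify; lra]).
  assert (Cmod m * (eps / (2 * (Cmod m + 1))) < eps / 2)
    by (apply Rmult_lt_reg_r with (2 * (Cmod m + 1)); [lra | field_simplify; lra]).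
  lra.
Qed.

Lemma filterlim_prodC (s : nat -> nat -> C) (l : nat -> C) m :
  (forall i, (i < m)%nat -> filterlim (s i) eventually (locally (l i))) ->
  filterlim (fun R => prodC (fun i => s i R) m) eventually (locally (prodC l m)).
Proof.
  induction m; intros H; simpl.
  - apply filterlim_const.
  - apply filterlim_seq_Cmult; [apply IHm; auto | apply H; lia].
Qed.

Lemma sumR_ext (f g : nat -> R) K : (forall j, (j < K)%nat -> f j = g j) -> sumR f K = sumR g K.
Proof.
  induction K; intros H; simpl; auto.
  rewrite IHK by (intros; apply H; lia). rewrite H by lia. reflexivity.
Qed.

Lemma sumR_le (f g : nat -> R) K : (forall j, (j < K)%nat -> f j <= g j) -> sumR f K <= sumR g K.
Proof.
  induction K; intros H; simpl; [lra|].
  pose proof (H K ltac:(lia)). pose proof (IHK ltac:(intros; apply H; lia)). lra.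
Qed.

Lemma sumR_mul_l (f : nat -> R) c K : sumR (fun j => c * f j) K = c * sumR f K.
Proof. induction K; simpl; [ring|]. rewrite IHK. ring. Qed.

Lemma sumR_geom_le (r : R) K : 0 <= r < 1 -> sumR (fun j => r ^ j) K <= / (1 - r).
Proof.
  intros Hr. assert (E : sumR (fun j => r ^ j) K * (1 - r) = 1 - r ^ K).
  { induction K; simpl; [ring|]. rewrite Rmult_plus_distr_r, IHK. ring. }
  pose proof (pow_le r K ltac:(lra)).
  apply Rmult_le_reg_r with (1 - r); [lra|]. rewrite E, Rinv_l; lra.
Qed.

Lemma sumR_geom_nonneg (r : R) K : 0 <= r -> 0 <= sumR (fun j => r ^ j) K.
Proof. intros Hr. induction K; simpl; [lra|]. pose proof (pow_le r K Hr). lra. Qed.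

(* [|prod (1 + a_j) - 1| <= exp (sum |a_j|) - 1], in a form stable under induction. *)
Lemma Cmod_prodC_sub_1 (f : nat -> C) (s : nat -> R) K :
  (forall j, (j < K)%nat -> Cmod (f j - 1) <= exp (s j) - 1) ->
  Cmod (prodC f K - 1) <= exp (sumR s K) - 1.
Proof.
  induction K; intros H; simpl.
  - replace (RtoC 1 - RtoC 1)%C with (RtoC 0) by ring. rewrite Cmod_0, exp_0. lra.
  - pose proof (IHK ltac:(intros; apply H; lia)) as IH. pose proof (H K ltac:(lia)) as HK.
    set (P := prodC f K) in *. set (z := f K) in *.
    replace (P * z - 1)%C with ((P - 1) * (z - 1) + (P - 1) + (z - 1))%C by ring.
    rewrite exp_plus.
    pose proof (Cmod_ge_0 (P - 1)). pose proof (Cmod_ge_0 (z - 1)).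
    pose proof (Cmod_triangle ((P - 1) * (z - 1) + (P - 1)) (z - 1)).
    pose proof (Cmod_triangle ((P - 1) * (z - 1)) (P - 1)).
    rewrite Cmod_mult in *.
    assert (Cmod (P - 1) * Cmod (z - 1) <= (exp (sumR s K) - 1) * (exp (s K) - 1))
      by (apply Rmult_le_compat; auto).
    nra.
Qed.

Definition grid_prod (h : nat -> nat -> C) (K : nat) : C :=
  prodC (fun j0 => prodC (fun j1 => h j0 j1) K) K.

Lemma grid_prod_mul (f g : nat -> nat -> C) K :
  grid_prod (fun j0 j1 => f j0 j1 * g j0 j1)%C K = (grid_prod f K * grid_prod g K)%C.
Proof. unfold grid_prod. rewrite <- prodC_mul. apply prodC_ext. intros. apply prodC_mul. Qed.

Lemma grid_prod_ext (f g : nat -> nat -> C) K :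
  (forall j0 j1, (j0 < K)%nat -> (j1 < K)%nat -> f j0 j1 = g j0 j1) ->
  grid_prod f K = grid_prod g K.
Proof. intros H. unfold grid_prod. apply prodC_ext. intros. apply prodC_ext. auto. Qed.

Lemma Cmod_grid_prod_sub_1 (h : nat -> nat -> C) K :
  Cmod (grid_prod h K - 1) <= exp (sumR (fun j0 => sumR (fun j1 => Cmod (h j0 j1 - 1)) K) K) - 1.
Proof.
  apply Cmod_prodC_sub_1. intros j0 _. apply Cmod_prodC_sub_1. intros j1 _.
  pose proof (exp_ineq1_le (Cmod (h j0 j1 - 1))). lra.
Qed.

(* The factors of [(y | a, b)_oo] indexed by a set [p] of exponent pairs;
   [qpoch_part y a b K] is the case of all pairs, truncated to [K x K]. *)
Definition qfactor_on (y a b : C) (p : nat -> nat -> bool) (j0 j1 : nat) : C :=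
  if p j0 j1 then (1 - y * Cpow a j0 * Cpow b j1)%C else RtoC 1.

(* A ratio [rho < 1] with [|a|, |b| <= rho^2]: the exponent budget splits between
   the decay [rho^k] of a tail and a summable double geometric series. *)
Definition qrate (a b : C) : R := (1 + Rmax (Cmod a) (Cmod b)) / 2.
Definition qgeom (a b : C) : R := / (1 - qrate a b) * / (1 - qrate a b).

Lemma qrate_spec (a b : C) : Cmod a < 1 -> Cmod b < 1 ->
  0 < qrate a b < 1 /\ Cmod a <= qrate a b ^ 2 /\ Cmod b <= qrate a b ^ 2.
Proof.
  intros Ha Hb. unfold qrate.
  pose proof (Cmod_ge_0 a). pose proof (Cmod_ge_0 b).
  pose proof (Rmax_l (Cmod a) (Cmod b)). pose proof (Rmax_r (Cmod a) (Cmod b)).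
  pose proof (Rmax_lub_lt _ _ _ Ha Hb).
  set (m := Rmax (Cmod a) (Cmod b)) in *. simpl. nra.
Qed.

Lemma qgeom_pos (a b : C) : Cmod a < 1 -> Cmod b < 1 -> 0 < qgeom a b.
Proof.
  intros Ha Hb. destruct (qrate_spec a b Ha Hb) as [Hr _]. unfold qgeom.
  assert (0 < / (1 - qrate a b)) by (apply Rinv_0_lt_compat; lra). nra.
Qed.

Lemma Cmod_qmonomial_le (y a b : C) (j0 j1 k : nat) : Cmod a < 1 -> Cmod b < 1 ->
  (k <= j0 + j1)%nat ->
  Cmod (y * Cpow a j0 * Cpow b j1) <= Cmod y * qrate a b ^ k * (qrate a b ^ j0 * qrate a b ^ j1).
Proof.
  intros Ha Hb Hk. destruct (qrate_spec a b Ha Hb) as [Hr [Har Hbr]].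
  set (r := qrate a b) in *.
  rewrite !Cmod_mult, !Cmod_Cpow.
  assert (Ea : Cmod a ^ j0 <= r ^ j0 * r ^ j0)
    by (rewrite <- Rpow_mult_distr; apply pow_incr; split; [apply Cmod_ge_0 | nra]).
  assert (Eb : Cmod b ^ j1 <= r ^ j1 * r ^ j1)
    by (rewrite <- Rpow_mult_distr; apply pow_incr; split; [apply Cmod_ge_0 | nra]).
  assert (Ek : r ^ j0 * r ^ j1 <= r ^ k).
  { rewrite <- pow_add. replace (j0 + j1)%nat with (k + (j0 + j1 - k))%nat by lia.
    rewrite pow_add. pose proof (pow_le r k ltac:(lra)).
    assert (r ^ (j0 + j1 - k) <= 1) by (rewrite <- (pow1 (j0 + j1 - k)); apply pow_incr; lra).
    nra. }
  pose proof (Cmod_ge_0 y). pose proof (pow_le (Cmod a) j0 (Cmod_ge_0 a)).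
  pose proof (pow_le (Cmod b) j1 (Cmod_ge_0 b)).
  pose proof (pow_le r j0 ltac:(lra)). pose proof (pow_le r j1 ltac:(lra)).
  assert (Cmod a ^ j0 * Cmod b ^ j1 <= (r ^ j0 * r ^ j1) * (r ^ j0 * r ^ j1)).
  { replace ((r ^ j0 * r ^ j1) * (r ^ j0 * r ^ j1)) with ((r ^ j0 * r ^ j0) * (r ^ j1 * r ^ j1))
      by ring. apply Rmult_le_compat; auto. }
  assert ((r ^ j0 * r ^ j1) * (r ^ j0 * r ^ j1) <= r ^ k * (r ^ j0 * r ^ j1))
    by (apply Rmult_le_compat_r; [apply Rmult_le_pos|]; auto).
  rewrite !Rmult_assoc. apply Rmult_le_compat_l; auto. nra.
Qed.

Lemma qfactor_on_sum_le (y a b : C) (q : nat -> nat -> bool) (k K : nat) :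
  Cmod a < 1 -> Cmod b < 1 -> (forall j0 j1, q j0 j1 = true -> (k <= j0 + j1)%nat) ->
  sumR (fun j0 => sumR (fun j1 => Cmod (qfactor_on y a b q j0 j1 - 1)) K) K
  <= Cmod y * qrate a b ^ k * qgeom a b.
Proof.
  intros Ha Hb Hq. destruct (qrate_spec a b Ha Hb) as [Hr _].
  set (r := qrate a b) in *. set (c := Cmod y * r ^ k).
  assert (Hc : 0 <= c) by (apply Rmult_le_pos; [apply Cmod_ge_0 | apply pow_le; lra]).
  set (G := sumR (fun j => r ^ j) K).
  assert (HG : 0 <= G <= / (1 - r)) by (split; [apply sumR_geom_nonneg | apply sumR_geom_le]; lra).
  apply Rle_trans with (sumR (fun j0 => sumR (fun j1 => c * (r ^ j0 * r ^ j1)) K) K).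
  - apply sumR_le; intros j0 _. apply sumR_le; intros j1 _.
    unfold qfactor_on. destruct (q j0 j1) eqn:E.
    + replace (1 - y * Cpow a j0 * Cpow b j1 - 1)%C with (- (y * Cpow a j0 * Cpow b j1))%C by ring.
      rewrite Cmod_opp. apply Cmod_qmonomial_le; auto.
    + replace (RtoC 1 - RtoC 1)%C with (RtoC 0) by ring. rewrite Cmod_0.
      apply Rmult_le_pos; auto. apply Rmult_le_pos; apply pow_le; lra.
  - rewrite (sumR_ext _ (fun j0 => (c * G) * r ^ j0)).
    + rewrite sumR_mul_l. change (sumR (pow r) K) with G. unfold qgeom. fold r c.
      assert (0 <= / (1 - r)) by (apply Rlt_le, Rinv_0_lt_compat; lra).
      rewrite Rmult_assoc. apply Rmult_le_compat_l; auto. apply Rmult_le_compat; lra.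
    + intros j0 _. rewrite (sumR_ext _ (fun j1 => (c * r ^ j0) * r ^ j1)) by (intros; ring).
      rewrite sumR_mul_l. change (sumR (pow r) K) with G. ring.
Qed.

Definition qpoch_tail_bound (y a b : C) (k : nat) : R :=
  exp (Cmod y * qgeom a b) * (exp (Cmod y * qrate a b ^ k * qgeom a b) - 1).

Lemma exp_le_compat (x y : R) : x <= y -> exp x <= exp y.
Proof. intros [H | H]; [left; apply exp_increasing; auto | rewrite H; lra]. Qed.

Lemma grid_prod_qfactor_on_split (y a b : C) (p p' : nat -> nat -> bool) K :
  (forall j0 j1, p j0 j1 = true -> p' j0 j1 = true) ->
  grid_prod (qfactor_on y a b p') K
  = (grid_prod (qfactor_on y a b p) K
     * grid_prod (qfactor_on y a b (fun j0 j1 => andb (p' j0 j1) (negb (p j0 j1)))) K)%C.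
Proof.
  intros Hpp. rewrite <- grid_prod_mul. apply grid_prod_ext. intros j0 j1 _ _.
  unfold qfactor_on. destruct (p j0 j1) eqn:E.
  - rewrite (Hpp _ _ E). simpl. ring.
  - destruct (p' j0 j1); simpl; ring.
Qed.

Lemma Cmod_grid_prod_qfactor_on_sub_1 (y a b : C) (q : nat -> nat -> bool) (k K : nat) :
  Cmod a < 1 -> Cmod b < 1 -> (forall j0 j1, q j0 j1 = true -> (k <= j0 + j1)%nat) ->
  Cmod (grid_prod (qfactor_on y a b q) K - 1) <= exp (Cmod y * qrate a b ^ k * qgeom a b) - 1.
Proof.
  intros Ha Hb Hq. eapply Rle_trans; [apply Cmod_grid_prod_sub_1|].
  apply Rplus_le_compat_r, exp_le_compat, qfactor_on_sum_le; auto.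
Qed.

Lemma Cmod_grid_prod_qfactor_on_le (y a b : C) (p : nat -> nat -> bool) (K : nat) :
  Cmod a < 1 -> Cmod b < 1 -> Cmod (grid_prod (qfactor_on y a b p) K) <= exp (Cmod y * qgeom a b).
Proof.
  intros Ha Hb.
  pose proof (Cmod_grid_prod_qfactor_on_sub_1 y a b p 0 K Ha Hb ltac:(intros; lia)) as H.
  pose proof (Cmod_triangle (grid_prod (qfactor_on y a b p) K - 1) 1).
  replace (grid_prod (qfactor_on y a b p) K - 1 + 1)%C with (grid_prod (qfactor_on y a b p) K)
    in * by ring.
  rewrite Cmod_1 in *. simpl pow in H. rewrite Rmult_1_r in H. lra.
Qed.

(* Enlarging the index set beyond the square [k x k] only adds factors with
   [j0 + j1 >= k]. *)
Lemma grid_prod_enlarge (y a b : C) (p p' : nat -> nat -> bool) (k K : nat) :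
  Cmod a < 1 -> Cmod b < 1 ->
  (forall j0 j1, p j0 j1 = true -> p' j0 j1 = true) ->
  (forall j0 j1, (j0 < k)%nat -> (j1 < k)%nat -> p j0 j1 = true) ->
  Cmod (grid_prod (qfactor_on y a b p') K - grid_prod (qfactor_on y a b p) K)
  <= qpoch_tail_bound y a b k.
Proof.
  intros Ha Hb Hpp Hk.
  rewrite (grid_prod_qfactor_on_split y a b p p') by auto.
  set (P := grid_prod (qfactor_on y a b p) K).
  set (Q := grid_prod (qfactor_on y a b (fun j0 j1 => andb (p' j0 j1) (negb (p j0 j1)))) K).
  replace (P * Q - P)%C with (P * (Q - 1))%C by ring.
  rewrite Cmod_mult. unfold qpoch_tail_bound.
  apply Rmult_le_compat; try apply Cmod_ge_0.
  - apply Cmod_grid_prod_qfactor_on_le; auto.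
  - apply Cmod_grid_prod_qfactor_on_sub_1; auto.
    intros j0 j1 Hq. apply andb_prop in Hq. destruct Hq as [_ Hq].
    destruct (Nat.lt_ge_cases j0 k), (Nat.lt_ge_cases j1 k); try lia.
    rewrite Hk in Hq by auto. discriminate.
Qed.

Lemma qpoch_tail_bound_vanishes (y a b : C) : Cmod a < 1 -> Cmod b < 1 ->
  forall eta, 0 < eta -> exists k0, forall k, (k0 <= k)%nat -> qpoch_tail_bound y a b k < eta.
Proof.
  intros Ha Hb eta Heta.
  destruct (qrate_spec a b Ha Hb) as [Hr _]. pose proof (qgeom_pos a b Ha Hb).
  set (M := exp (Cmod y * qgeom a b)). assert (HM : 0 < M) by apply exp_pos.
  set (t := ln (1 + eta / M)).
  assert (Heta' : 0 < eta / M) by (apply Rdiv_lt_0_compat; auto).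
  assert (Ht : 0 < t) by (unfold t; rewrite <- ln_1; apply ln_increasing; lra).
  pose proof (Cmod_ge_0 y).
  destruct (pow_lt_1_zero (qrate a b) ltac:(rewrite Rabs_pos_eq; lra)
              (t / (Cmod y * qgeom a b + 1)) ltac:(apply Rdiv_lt_0_compat; nra)) as [k0 Hk0].
  exists k0. intros k Hk. specialize (Hk0 k Hk).
  rewrite Rabs_pos_eq in Hk0 by (apply pow_le; lra).
  assert (Hsmall : Cmod y * qrate a b ^ k * qgeom a b < t).
  { apply Rmult_lt_compat_r with (r := Cmod y * qgeom a b + 1) in Hk0; [|nra].
    field_simplify in Hk0; [|nra]. pose proof (pow_le (qrate a b) k ltac:(lra)). nra. }
  apply exp_increasing in Hsmall. unfold t in Hsmall. rewrite exp_ln in Hsmall by lra.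
  unfold qpoch_tail_bound. fold M.
  apply Rmult_lt_compat_l with (r := M) in Hsmall; auto.
  replace (M * (1 + eta / M)) with (M + eta) in Hsmall by (field; lra). lra.
Qed.

Definition in_square (m j0 j1 : nat) : bool := (j0 <? m)%nat && (j1 <? m)%nat.

Lemma grid_prod_square (y a b : C) m K : (m <= K)%nat ->
  grid_prod (qfactor_on y a b (in_square m)) K = qpoch_part y a b m.
Proof.
  intros HmK. unfold grid_prod, qpoch_part.
  rewrite (prodC_stationary _ m K); auto.
  - apply prodC_ext. intros j0 Hj0. rewrite (prodC_stationary _ m K); auto.
    + apply prodC_ext. intros j1 Hj1. unfold qfactor_on, in_square.
      rewrite (proj2 (Nat.ltb_lt j0 m)), (proj2 (Nat.ltb_lt j1 m)); auto.
    + intros j1 Hj1. unfold qfactor_on, in_square.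
      rewrite (proj2 (Nat.ltb_ge j1 m)), Bool.andb_false_r; auto.
  - intros j0 Hj0. apply prodC_1. intros j1 _. unfold qfactor_on, in_square.
    rewrite (proj2 (Nat.ltb_ge j0 m)); auto.
Qed.

Lemma qpoch_part_converges (y a b : C) : Cmod a < 1 -> Cmod b < 1 ->
  filterlim (qpoch_part y a b) eventually (locally (qpoch_lim y a b)).
Proof.
  intros Ha Hb. unfold qpoch_lim.
  apply (epsilon_spec (inhabits (RtoC 0))
           (fun L => filterlim (qpoch_part y a b) eventually (locally L))).
  apply Cauchy_seq_C_converges. intros eps Heps.
  destruct (qpoch_tail_bound_vanishes y a b Ha Hb eps Heps) as [k0 Hk0].
  assert (Hmono : forall m n, (k0 <= m)%nat -> (m <= n)%nat ->
            Cmod (qpoch_part y a b n - qpoch_part y a b m) < eps).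
  { intros m n Hm Hmn. rewrite <- (grid_prod_square y a b m n Hmn).
    eapply Rle_lt_trans; [apply (grid_prod_enlarge y a b (in_square m) (fun _ _ => true) m n)|];
      auto.
    intros j0 j1 H0 H1. unfold in_square.
    rewrite (proj2 (Nat.ltb_lt j0 m)), (proj2 (Nat.ltb_lt j1 m)); auto. }
  exists k0. intros m n Hm Hn. destruct (Nat.le_ge_cases m n).
  - rewrite Cmod_sub_sym. auto.
  - auto.
Qed.

Lemma grid_prod_near_qpoch_lim (y a b : C) : Cmod a < 1 -> Cmod b < 1 ->
  forall eps, 0 < eps -> exists k, forall K (p : nat -> nat -> bool), (k <= K)%nat ->
    (forall j0 j1, (j0 < k)%nat -> (j1 < k)%nat -> p j0 j1 = true) ->
    Cmod (grid_prod (qfactor_on y a b p) K - qpoch_lim y a b) < eps.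
Proof.
  intros Ha Hb eps Heps.
  destruct (qpoch_tail_bound_vanishes y a b Ha Hb (eps / 2) ltac:(lra)) as [k0 Hk0].
  destruct (proj1 (filterlim_seq_Cmod _ _) (qpoch_part_converges y a b Ha Hb) (eps / 2)
              ltac:(lra)) as [N0 HN0].
  exists (Nat.max k0 N0). intros K p HK Hp.
  eapply Rle_lt_trans; [apply (Cmod_sub_triangle _ (qpoch_part y a b K))|].
  assert (Cmod (grid_prod (qfactor_on y a b p) K - qpoch_part y a b K)
          <= qpoch_tail_bound y a b (Nat.max k0 N0)).
  { rewrite Cmod_sub_sym. apply (grid_prod_enlarge y a b p (fun _ _ => true)); auto. }
  pose proof (Hk0 (Nat.max k0 N0) ltac:(lia)). pose proof (HN0 K ltac:(lia)). lra.
Qed.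

(** * Cone products as limits of box products *)

Lemma e2pi_add (a b : C) : e2pi (a + b) = (e2pi a * e2pi b)%C.
Proof.
  destruct a as [a1 a2], b as [b1 b2]. unfold e2pi, Cmult, Cplus, Re, Im; simpl.
  replace (2 * PI * (a1 + b1)) with (2 * PI * a1 + 2 * PI * b1) by ring.
  replace (-2 * PI * (a2 + b2)) with (-2 * PI * a2 + -2 * PI * b2) by ring.
  rewrite cos_plus, sin_plus, exp_plus. apply injective_projections; simpl; ring.
Qed.

Lemma e2pi_0 : e2pi (RtoC 0) = RtoC 1.
Proof.
  unfold e2pi, RtoC, Re, Im; simpl. rewrite !Rmult_0_r, exp_0, cos_0, sin_0.
  apply injective_projections; simpl; ring.
Qed.

Lemma e2pi_opp (t : C) : e2pi (- t) = Cinv (e2pi t).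
Proof.
  assert (H := e2pi_add t (- t)). replace (t + - t)%C with (RtoC 0) in H by ring.
  rewrite e2pi_0 in H.
  assert (Hnz : e2pi t <> RtoC 0).
  { intros E. rewrite E, Cmult_0_l in H. apply (f_equal fst) in H. simpl in H. lra. }
  replace (e2pi (- t)) with (/ e2pi t * (e2pi t * e2pi (- t)))%C by (field; auto).
  rewrite <- H. ring.
Qed.

Lemma Cmod_e2pi (t : C) : Cmod (e2pi t) = exp (-2 * PI * Im t).
Proof.
  unfold e2pi, Cmod; cbn [fst snd].
  replace ((exp (-2 * PI * Im t) * cos (2 * PI * Re t)) ^ 2 +
           (exp (-2 * PI * Im t) * sin (2 * PI * Re t)) ^ 2)
     with (exp (-2 * PI * Im t) ^ 2 * ((sin (2 * PI * Re t))² + (cos (2 * PI * Re t))²))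
     by (unfold Rsqr; ring).
  rewrite sin2_cos2, Rmult_1_r. apply sqrt_pow2. left; apply exp_pos.
Qed.

Lemma Cpow_e2pi (t : C) n : Cpow (e2pi t) n = e2pi (RtoC (INR n) * t).
Proof.
  induction n; simpl Cpow.
  - rewrite Cmult_0_l. symmetry. apply e2pi_0.
  - rewrite IHn, <- e2pi_add, S_INR, RtoC_plus. f_equal. ring.
Qed.

Lemma crossCZ_vadd (w : C * C) (a b : Z * Z) :
  crossCZ w (vadd a b) = (crossCZ w a + crossCZ w b)%C.
Proof. unfold crossCZ, vadd; simpl. rewrite !plus_IZR, !RtoC_plus. ring. Qed.

Lemma crossCZ_vopp (w : C * C) (a : Z * Z) : crossCZ w (vopp a) = (- crossCZ w a)%C.
Proof. unfold crossCZ, vopp; simpl. rewrite !opp_IZR, !RtoC_opp. ring. Qed.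

Lemma crossCZ_vscale (w : C * C) (k : Z) (a : Z * Z) :
  crossCZ w (vscale k a) = (RtoC (IZR k) * crossCZ w a)%C.
Proof. unfold crossCZ, vscale; simpl. rewrite !mult_IZR, !RtoC_mult. ring. Qed.

Lemma crossCZ_origin (w : C * C) : crossCZ w (0%Z, 0%Z) = RtoC 0.
Proof. unfold crossCZ; simpl. ring. Qed.

Definition ew (w : C * C) (v : Z * Z) : C := e2pi (crossCZ w v).

Lemma ew_vadd (w : C * C) (a b : Z * Z) : ew w (vadd a b) = (ew w a * ew w b)%C.
Proof. unfold ew. rewrite crossCZ_vadd. apply e2pi_add. Qed.

Lemma ew_vopp (w : C * C) (a : Z * Z) : ew w (vopp a) = Cinv (ew w a).
Proof. unfold ew. rewrite crossCZ_vopp. apply e2pi_opp. Qed.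

Lemma ew_origin (w : C * C) : ew w (0%Z, 0%Z) = RtoC 1.
Proof. unfold ew. rewrite crossCZ_origin. apply e2pi_0. Qed.

Lemma Cpow_ew (w : C * C) (a : Z * Z) n : Cpow (ew w a) n = ew w (vscale (Z.of_nat n) a).
Proof. unfold ew. rewrite Cpow_e2pi, crossCZ_vscale, <- INR_IZR_INZ. auto. Qed.

Lemma Cmod_ew (w : C * C) (a : Z * Z) : Cmod (ew w a) = exp (-2 * PI * im_cross w a).
Proof. apply Cmod_e2pi. Qed.

Lemma im_cross_vopp (w : C * C) (a : Z * Z) : im_cross w (vopp a) = - im_cross w a.
Proof. unfold im_cross. rewrite crossCZ_vopp. auto. Qed.

Lemma Cmod_ew_lt_1 (w : C * C) (d : Z * Z) : 0 < im_cross w d -> Cmod (ew w d) < 1.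
Proof.
  intros H. rewrite Cmod_ew, <- exp_0. apply exp_increasing. pose proof PI_RGT_0. nra.
Qed.

Lemma Cmod_ew_gt_1 (w : C * C) (d : Z * Z) : im_cross w d < 0 -> 1 < Cmod (ew w d).
Proof.
  intros H. rewrite Cmod_ew, <- exp_0. apply exp_increasing. pose proof PI_RGT_0. nra.
Qed.

Definition cone_point (c d0 d1 : Z * Z) (j : nat * nat) : Z * Z :=
  vadd c (vadd (vscale (Z.of_nat (fst j)) d0) (vscale (Z.of_nat (snd j)) d1)).

Lemma qfactor_on_cone (w : C * C) (x : C) (c d0 d1 : Z * Z) p j0 j1 :
  qfactor_on (x * ew w c) (ew w d0) (ew w d1) p j0 j1
  = if p j0 j1 then (1 - x * ew w (cone_point c d0 d1 (j0, j1)))%C else RtoC 1.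
Proof.
  unfold qfactor_on, cone_point. simpl. rewrite !ew_vadd, !Cpow_ew.
  destruct (p j0 j1); [ring | auto].
Qed.

Fixpoint prodL {A : Type} (f : A -> C) (l : list A) : C :=
  match l with nil => RtoC 1 | a :: l' => (f a * prodL f l')%C end.

Lemma prodL_app {A} (f : A -> C) l1 l2 : prodL f (l1 ++ l2) = (prodL f l1 * prodL f l2)%C.
Proof. induction l1; simpl; [ring|]. rewrite IHl1. ring. Qed.

Lemma prodL_ext {A} (f g : A -> C) l : (forall x, In x l -> f x = g x) -> prodL f l = prodL g l.
Proof.
  induction l; intros H; simpl; auto.
  rewrite H by (left; auto). rewrite IHl; auto. intros; apply H; right; auto.
Qed.

Lemma prodL_map {A B} (f : B -> C) (g : A -> B) l : prodL f (map g l) = prodL (fun a => f (g a)) l.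
Proof. induction l; simpl; auto. rewrite IHl; auto. Qed.

Lemma prodL_filter {A} (f : A -> C) (P : A -> bool) l :
  prodL f (filter P l) = prodL (fun a => if P a then f a else RtoC 1) l.
Proof. induction l; simpl; auto. destruct (P a); simpl; rewrite IHl; ring. Qed.

Lemma prodL_perm {A} (f : A -> C) l l' : Permutation l l' -> prodL f l = prodL f l'.
Proof. intros H; induction H; simpl; try ring; congruence. Qed.

Lemma prodL_mul {A} (f g : A -> C) l : prodL (fun a => f a * g a)%C l = (prodL f l * prodL g l)%C.
Proof. induction l; simpl; [ring|]. rewrite IHl. ring. Qed.

Lemma prodL_list_prod {A B} (h : A -> B -> C) l1 l2 :
  prodL (fun p => h (fst p) (snd p)) (list_prod l1 l2) = prodL (fun a => prodL (h a) l2) l1.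
Proof. induction l1; simpl; auto. rewrite prodL_app, IHl1, prodL_map. reflexivity. Qed.

Lemma prodC_prodL (f : nat -> C) K : prodC f K = prodL f (seq 0 K).
Proof.
  induction K; [reflexivity|]. cbn [prodC]. rewrite seq_S, prodL_app, IHK. simpl. ring.
Qed.

Lemma prodC_prodL_comm {A} (F : nat -> A -> C) l m :
  prodC (fun i => prodL (F i) l) m = prodL (fun a => prodC (fun i => F i a) m) l.
Proof.
  induction m; simpl.
  - induction l; simpl; auto. rewrite <- IHl. ring.
  - rewrite IHm, <- prodL_mul. reflexivity.
Qed.

Lemma prodL_1 {A} (l : list A) : prodL (fun _ => RtoC 1) l = RtoC 1.
Proof. induction l; simpl; auto. rewrite IHl. ring. Qed.

Lemma prodL_single {A} (f : A -> C) l (x0 : A) : NoDup l -> In x0 l ->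
  (forall x, In x l -> x <> x0 -> f x = RtoC 1) -> prodL f l = f x0.
Proof.
  induction l as [|a l IHl]; simpl; intros Hnd Hin H; [contradiction|].
  inversion Hnd as [|? ? Ha Hl]; subst.
  destruct Hin as [<-|Hin].
  - rewrite (prodL_ext _ (fun _ => RtoC 1)).
    + rewrite prodL_1. ring.
    + intros x Hx. apply H; auto. intros ->. contradiction.
  - rewrite IHl, H; auto; [ring|]. intros ->. contradiction.
Qed.

Lemma NoDup_list_prod {A B} (l1 : list A) (l2 : list B) :
  NoDup l1 -> NoDup l2 -> NoDup (list_prod l1 l2).
Proof.
  induction l1; intros H1 H2; simpl; [constructor|].
  inversion H1; subst. apply NoDup_app.
  - apply FinFun.Injective_map_NoDup; auto. intros x y E; injection E; auto.
  - apply IHl1; auto.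
  - intros [p q] Hp Hq. apply in_map_iff in Hp. destruct Hp as [b [E _]].
    injection E; intros; subst. apply in_prod_iff in Hq. tauto.
Qed.

Lemma list_bound {A} (l : list A) (g : A -> nat) : exists K, forall x, In x l -> (g x < K)%nat.
Proof.
  induction l as [|a l [K HK]]; [exists O; intros x []|].
  exists (Nat.max K (S (g a))). intros x [<-|Hx]; [lia|]. specialize (HK x Hx). lia.
Qed.

Definition grid (K : nat) : list (nat * nat) := list_prod (seq 0 K) (seq 0 K).

Lemma grid_prod_grid (h : nat -> nat -> C) K :
  grid_prod h K = prodL (fun j => h (fst j) (snd j)) (grid K).
Proof.
  unfold grid_prod, grid. rewrite prodL_list_prod, prodC_prodL. apply prodL_ext.
  intros j0 _. apply prodC_prodL.
Qed.

Lemma in_grid (K : nat) (j : nat * nat) : In j (grid K) <-> (fst j < K)%nat /\ (snd j < K)%nat.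
Proof. destruct j. unfold grid. rewrite in_prod_iff, !in_seq. simpl. lia. Qed.

Definition zrange (R : nat) : list Z :=
  map (fun k => (Z.of_nat k - Z.of_nat R)%Z) (seq 0 (2 * R + 1)).

Definition box (R : nat) : list (Z * Z) := list_prod (zrange R) (zrange R).

Lemma in_zrange R z : In z (zrange R) <-> (Z.abs z <= Z.of_nat R)%Z.
Proof.
  unfold zrange. rewrite in_map_iff. split.
  - intros [k [<- Hk]]. apply in_seq in Hk. lia.
  - intros H. exists (Z.to_nat (z + Z.of_nat R)). split; [lia|]. apply in_seq. lia.
Qed.

Lemma in_box R v : In v (box R) <-> (Z.abs (fst v) <= Z.of_nat R /\ Z.abs (snd v) <= Z.of_nat R)%Z.
Proof. destruct v. unfold box. rewrite in_prod_iff, !in_zrange. reflexivity. Qed.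

Lemma NoDup_box R : NoDup (box R).
Proof.
  apply NoDup_list_prod; apply FinFun.Injective_map_NoDup; try apply seq_NoDup;
    intros a b E; lia.
Qed.

Definition in_boxb (R : nat) (v : Z * Z) : bool :=
  (Z.abs (fst v) <=? Z.of_nat R)%Z && (Z.abs (snd v) <=? Z.of_nat R)%Z.

Lemma in_boxb_spec R v : in_boxb R v = true <-> In v (box R).
Proof. rewrite in_box. unfold in_boxb. rewrite Bool.andb_true_iff, !Z.leb_le. reflexivity. Qed.

Section UnimodularCone.
Variables c d0 d1 : Z * Z.
Hypothesis unimodular : (crossZ d0 d1 * crossZ d0 d1 = 1)%Z.

Definition cone_coords (v : Z * Z) : nat * nat :=
  (Z.to_nat (crossZ d0 d1 * crossZ (vsub v c) d1),
   Z.to_nat (crossZ d0 d1 * crossZ d0 (vsub v c))).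

Lemma cross_cone_point_sub (j : nat * nat) :
  crossZ (vsub (cone_point c d0 d1 j) c) d1 = (Z.of_nat (fst j) * crossZ d0 d1)%Z /\
  crossZ d0 (vsub (cone_point c d0 d1 j) c) = (Z.of_nat (snd j) * crossZ d0 d1)%Z.
Proof. unfold crossZ, vsub, cone_point, vadd, vopp, vscale; simpl. split; ring. Qed.

Lemma in_cone_point (j : nat * nat) : in_cone c d0 d1 (cone_point c d0 d1 j) = true.
Proof.
  unfold in_cone. destruct (cross_cone_point_sub j) as [-> ->].
  rewrite !Z.mul_assoc, !(Z.mul_comm (crossZ d0 d1)), <- !Z.mul_assoc, unimodular.
  apply andb_true_intro; split; apply Z.leb_le; lia.
Qed.

Lemma cone_coords_point (j : nat * nat) : cone_coords (cone_point c d0 d1 j) = j.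
Proof.
  unfold cone_coords. destruct (cross_cone_point_sub j) as [-> ->].
  rewrite !Z.mul_assoc, !(Z.mul_comm (crossZ d0 d1)), <- !Z.mul_assoc, unimodular, !Z.mul_1_r.
  rewrite !Nat2Z.id. destruct j; auto.
Qed.

Lemma cone_point_coords (v : Z * Z) : in_cone c d0 d1 v = true ->
  cone_point c d0 d1 (cone_coords v) = v.
Proof.
  unfold in_cone, cone_coords. rewrite Bool.andb_true_iff, !Z.leb_le. intros [H0 H1].
  unfold cone_point. cbn [fst snd]. rewrite !Z2Nat.id by auto.
  destruct v as [v1 v2], c as [c1 c2], d0 as [a1 a2], d1 as [b1 b2].
  unfold crossZ, vsub, vadd, vopp, vscale in *; cbn [fst snd] in *.
  set (dl := (a1 * b2 - a2 * b1)%Z) in *.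
  apply injective_projections; cbn [fst snd].
  - transitivity (c1 + dl * dl * (v1 - c1))%Z; [unfold dl; ring | rewrite unimodular; ring].
  - transitivity (c2 + dl * dl * (v2 - c2))%Z; [unfold dl; ring | rewrite unimodular; ring].
Qed.

Lemma cone_point_injective : FinFun.Injective (cone_point c d0 d1).
Proof.
  intros j j' E. rewrite <- (cone_coords_point j), <- (cone_coords_point j'), E. reflexivity.
Qed.

Lemma grid_prod_cone_box (w : C * C) (x : C) (R K : nat) :
  (forall v, In v (box R) -> in_cone c d0 d1 v = true ->
     (fst (cone_coords v) < K)%nat /\ (snd (cone_coords v) < K)%nat) ->
  grid_prod (qfactor_on (x * ew w c) (ew w d0) (ew w d1)
               (fun j0 j1 => in_boxb R (cone_point c d0 d1 (j0, j1)))) K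
  = prodL (fun v => if in_cone c d0 d1 v then (1 - x * ew w v)%C else RtoC 1) (box R).
Proof.
  intros HK. set (F := fun v => (1 - x * ew w v)%C).
  rewrite grid_prod_grid.
  rewrite (prodL_ext _ (fun j => if in_boxb R (cone_point c d0 d1 j)
                                 then F (cone_point c d0 d1 j) else RtoC 1))
    by (intros [j0 j1] _; apply qfactor_on_cone).
  rewrite <- (prodL_filter (fun j => F (cone_point c d0 d1 j))), <- prodL_map,
    <- (prodL_filter F).
  apply prodL_perm, NoDup_Permutation.
  - apply FinFun.Injective_map_NoDup; [apply cone_point_injective|].
    apply NoDup_filter, NoDup_list_prod; apply seq_NoDup.
  - apply NoDup_filter, NoDup_box.
  - intros v. rewrite in_map_iff, filter_In. split.
    + intros [j [<- Hj]]. rewrite filter_In, in_boxb_spec in Hj.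
      split; [tauto | apply in_cone_point].
    + intros [Hv Hc]. exists (cone_coords v). rewrite cone_point_coords by auto.
      split; auto. rewrite filter_In, in_grid, in_boxb_spec, cone_point_coords by auto. auto.
Qed.

Lemma cone_square_in_box (k : nat) : exists R0, forall R, (R0 <= R)%nat ->
  forall j0 j1, (j0 < k)%nat -> (j1 < k)%nat -> in_boxb R (cone_point c d0 d1 (j0, j1)) = true.
Proof.
  destruct (list_bound (grid k) (fun j => Z.to_nat (Z.abs (fst (cone_point c d0 d1 j))) +
                                          Z.to_nat (Z.abs (snd (cone_point c d0 d1 j))))%nat)
    as [R0 HR].
  exists R0. intros R HR0 j0 j1 H0 H1.
  specialize (HR (j0, j1) ltac:(apply in_grid; simpl; auto)).
  apply in_boxb_spec, in_box. lia.
Qed.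

Definition cone_box_prod (w : C * C) (x : C) (R : nat) : C :=
  prodL (fun v => if in_cone c d0 d1 v then (1 - x * ew w v)%C else RtoC 1) (box R).

Lemma cone_box_prod_converges (w : C * C) (x : C) : 0 < im_cross w d0 -> 0 < im_cross w d1 ->
  filterlim (cone_box_prod w x) eventually
            (locally (qpoch_lim (x * ew w c) (ew w d0) (ew w d1))).
Proof.
  intros H0 H1. apply filterlim_seq_Cmod. intros eps Heps.
  destruct (grid_prod_near_qpoch_lim (x * ew w c) (ew w d0) (ew w d1)
              (Cmod_ew_lt_1 _ _ H0) (Cmod_ew_lt_1 _ _ H1) eps Heps) as [k Hk].
  destruct (cone_square_in_box k) as [R0 HR0].
  exists R0. intros R HR.
  destruct (list_bound (box R) (fun v => fst (cone_coords v) + snd (cone_coords v))%nat)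
    as [K HK].
  unfold cone_box_prod. rewrite <- (grid_prod_cone_box w x R (Nat.max K k)).
  - apply Hk; [lia|]. intros j0 j1 Hj0 Hj1. apply HR0; auto.
  - intros v Hv _. specialize (HK v Hv). lia.
Qed.

End UnimodularCone.

Lemma qpoch_lt_lt (x q0 q1 : C) : Cmod q0 < 1 -> Cmod q1 < 1 -> qpoch x q0 q1 = qpoch_lim x q0 q1.
Proof.
  intros H0 H1. unfold qpoch.
  destruct (Rlt_dec (Cmod q0) 1); [|lra]. destruct (Rlt_dec (Cmod q1) 1); [|lra].
  destruct (Rlt_dec 1 (Cmod q0)); reflexivity.
Qed.

Lemma qpoch_gt_lt (x q0 q1 : C) : 1 < Cmod q0 -> Cmod q1 < 1 ->
  qpoch x q0 q1 = Cinv (qpoch_lim (Cinv q0 * x) (Cinv q0) q1).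
Proof.
  intros H0 H1. unfold qpoch.
  destruct (Rlt_dec (Cmod q0) 1); [lra|]. destruct (Rlt_dec 1 (Cmod q0)); [|lra].
  destruct (Rlt_dec (Cmod q1) 1); [reflexivity | lra].
Qed.

Lemma qpoch_lt_gt (x q0 q1 : C) : Cmod q0 < 1 -> 1 < Cmod q1 ->
  qpoch x q0 q1 = Cinv (qpoch_lim (Cinv q1 * x) q0 (Cinv q1)).
Proof.
  intros H0 H1. unfold qpoch.
  destruct (Rlt_dec (Cmod q0) 1); [|lra]. destruct (Rlt_dec 1 (Cmod q0)); [lra|].
  destruct (Rlt_dec (Cmod q1) 1); [lra|]. destruct (Rlt_dec 1 (Cmod q1)); [reflexivity | lra].
Qed.

Lemma qpoch_gt_gt (x q0 q1 : C) : 1 < Cmod q0 -> 1 < Cmod q1 ->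
  qpoch x q0 q1 = qpoch_lim (Cinv q0 * Cinv q1 * x) (Cinv q0) (Cinv q1).
Proof.
  intros H0 H1. unfold qpoch.
  destruct (Rlt_dec (Cmod q0) 1); [lra|]. destruct (Rlt_dec 1 (Cmod q0)); [|lra].
  destruct (Rlt_dec (Cmod q1) 1); [lra|]. destruct (Rlt_dec 1 (Cmod q1)); [reflexivity | lra].
Qed.

Definition fan_qpoch (w : C * C) (x : C) (a b : Z * Z) : C :=
  qpoch_lim (x * ew w (fan_apex w a b)) (ew w (fan_edge w a)) (ew w (fan_edge w b)).

Lemma qpoch_fan_factor (w : C * C) (x : C) (a b : Z * Z) :
  im_cross w a <> 0 -> im_cross w b <> 0 ->
  qpoch_finite x (e2pi (crossCZ w a)) (e2pi (- crossCZ w b)) ->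
  qpoch x (e2pi (crossCZ w a)) (e2pi (- crossCZ w b))
    = (if fan_sign w a b then fan_qpoch w x a b else Cinv (fan_qpoch w x a b)) /\
  (fan_sign w a b = false -> fan_qpoch w x a b <> RtoC 0).
Proof.
  intros Ha Hb [Fin1 Fin2].
  change (e2pi (crossCZ w a)) with (ew w a) in *.
  replace (e2pi (- crossCZ w b)) with (ew w (vopp b)) in *
    by (unfold ew; rewrite crossCZ_vopp; auto).
  assert (Eb : Cinv (ew w (vopp b)) = ew w b).
  { rewrite <- ew_vopp. destruct b. unfold vopp. simpl. rewrite !Z.opp_involutive. auto. }
  assert (Ea : ew w (vopp a) = Cinv (ew w a)) by apply ew_vopp.
  assert (E0 : forall v, ew w (vadd (0%Z, 0%Z) v) = ew w v /\ ew w (vadd v (0%Z, 0%Z)) = ew w v)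
    by (intros; rewrite !ew_vadd, ew_origin; split; ring).
  unfold fan_sign, fan_qpoch, fan_apex, fan_edge, im_pos.
  destruct (Rlt_dec 0 (im_cross w a)) as [Pa|Pa], (Rlt_dec 0 (im_cross w b)) as [Pb|Pb];
    unfold cone_apex, cone_edge; cbn [xorb].
  - rewrite qpoch_lt_gt, (proj1 (E0 b)), Eb, Cmult_comm
      by (apply Cmod_ew_lt_1 || apply Cmod_ew_gt_1; rewrite ?im_cross_vopp; lra).
    split; [reflexivity|]. intros _. rewrite <- Eb, Cmult_comm. apply Fin2.
    + apply Cmod_ew_lt_1; auto.
    + apply Cmod_ew_gt_1. rewrite im_cross_vopp. lra.
  - rewrite qpoch_lt_lt, ew_vadd, ew_origin, Cmult_1_l, Cmult_1_r
      by (apply Cmod_ew_lt_1; rewrite ?im_cross_vopp; lra).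
    split; [reflexivity | discriminate].
  - rewrite qpoch_gt_gt, ew_vadd, Ea, Eb by (apply Cmod_ew_gt_1; rewrite ?im_cross_vopp; lra).
    split; [f_equal; ring | discriminate].
  - rewrite qpoch_gt_lt, (proj2 (E0 (vopp a))), Ea, Cmult_comm
      by (apply Cmod_ew_gt_1 || apply Cmod_ew_lt_1; rewrite ?im_cross_vopp; lra).
    split; [reflexivity|]. intros _. rewrite Cmult_comm. apply Fin1.
    + apply Cmod_ew_gt_1. lra.
    + apply Cmod_ew_lt_1. rewrite im_cross_vopp. lra.
Qed.

Fixpoint count_true (b : nat -> bool) (m : nat) : nat :=
  match m with O => O | S k => (count_true b k + if b k then 1 else 0)%nat end.

Lemma prodC_indicator (b : nat -> bool) (z : C) m :
  prodC (fun i => if b i then z else RtoC 1) m = Cpow z (count_true b m).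
Proof.
  induction m; simpl; auto.
  rewrite IHm, Cpow_add_r. destruct (b m); simpl; ring.
Qed.

Lemma sumZ_signed_indicator (s c : nat -> bool) n :
  sumZ (fun i => (pm (s i) * (if c i then 1 else 0))%Z) n
  = (Z.of_nat (count_true (fun i => andb (s i) (c i)) (S n))
     - Z.of_nat (count_true (fun i => andb (negb (s i)) (c i)) (S n)))%Z.
Proof.
  induction n.
  - simpl. destruct (s 0%nat), (c 0%nat); reflexivity.
  - cbn [sumZ]. rewrite IHn. cbn [count_true].
    destruct (s (S n)), (c (S n)); cbn [andb negb pm]; lia.
Qed.

(* Stated without inverses, so that [z] may vanish. *)
Lemma prodC_signed_indicator (s c : nat -> bool) (z : C) n (e : bool) :
  sumZ (fun i => (pm (s i) * (if c i then 1 else 0))%Z) n = (if e then 1 else 0)%Z ->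
  prodC (fun i => if andb (s i) (c i) then z else RtoC 1) (S n)
  = ((if e then z else RtoC 1)
     * prodC (fun i => if andb (negb (s i)) (c i) then z else RtoC 1) (S n))%C.
Proof.
  rewrite sumZ_signed_indicator. intros Hcount.
  rewrite !(prodC_indicator (fun i => andb _ (c i))).
  replace (count_true (fun i => andb (s i) (c i)) (S n))
    with ((if e then 1 else 0) + count_true (fun i => andb (negb (s i)) (c i)) (S n))%nat
    by (destruct e; lia).
  rewrite Cpow_add_r. destruct e; simpl; ring.
Qed.

Lemma prodC_signed_inv (s : nat -> bool) (L : nat -> C) (c : C) m :
  (forall i, (i < m)%nat -> s i = false -> L i <> RtoC 0) ->
  prodC (fun i => if s i then L i else RtoC 1) m
  = (c * prodC (fun i => if negb (s i) then L i else RtoC 1) m)%C ->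
  prodC (fun i => if s i then L i else Cinv (L i)) m = c.
Proof.
  intros HL Hc.
  set (Q := prodC (fun i => if negb (s i) then L i else RtoC 1) m) in *.
  assert (HQ : Q <> RtoC 0).
  { apply prodC_neq_0. intros i Hi. destruct (s i) eqn:Es; [apply C1_nz | apply HL; auto]. }
  assert (HPQ : (prodC (fun i => if s i then L i else Cinv (L i)) m * Q)%C = (c * Q)%C).
  { rewrite <- Hc. unfold Q. rewrite <- prodC_mul. apply prodC_ext. intros i Hi.
    destruct (s i) eqn:Es; simpl; [ring|]. rewrite Cinv_l; auto. }
  rewrite <- (Cmult_1_r (prodC _ m)), <- (Cinv_r Q HQ), Cmult_assoc, HPQ. field. auto.
Qed.

Lemma prodC_if_prodL {A} (s : nat -> bool) (g : nat -> A -> C) (l : list A) m :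
  prodC (fun i => if s i then prodL (g i) l else RtoC 1) m
  = prodL (fun a => prodC (fun i => if s i then g i a else RtoC 1) m) l.
Proof.
  rewrite <- prodC_prodL_comm. apply prodC_ext. intros i _.
  destruct (s i); [reflexivity | symmetry; apply prodL_1].
Qed.

Lemma box_prod_signed_cones (s : nat -> bool) (cone : nat -> Z * Z -> bool)
    (f : Z * Z -> C) (n R : nat) :
  (forall v, sumZ (fun i => (pm (s i) * (if cone i v then 1 else 0))%Z) n
             = (if is_origin v then 1 else 0)%Z) ->
  prodC (fun i => if s i then prodL (fun v => if cone i v then f v else RtoC 1) (box R)
                  else RtoC 1) (S n)
  = (f (0%Z, 0%Z) * prodC (fun i => if negb (s i)
                              then prodL (fun v => if cone i v then f v else RtoC 1) (box R)
                              else RtoC 1) (S n))%C.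
Proof.
  intros Hcount. rewrite !prodC_if_prodL.
  rewrite (prodL_ext _ (fun v => (if is_origin v then f v else RtoC 1)
             * prodC (fun i => if negb (s i) then if cone i v then f v else RtoC 1 else RtoC 1)
                     (S n))%C).
  - rewrite prodL_mul, (prodL_single _ _ (0%Z, 0%Z)); [reflexivity | apply NoDup_box | |].
    + apply in_box. simpl. lia.
    + intros [v1 v2] _ Hv. unfold is_origin. simpl.
      destruct (Z.eqb_spec v1 0), (Z.eqb_spec v2 0); subst; simpl; auto. contradiction.
  - intros v _.
    assert (Hind : forall t : nat -> bool,
      prodC (fun i => if t i then if cone i v then f v else RtoC 1 else RtoC 1) (S n)
      = prodC (fun i => if andb (t i) (cone i v) then f v else RtoC 1) (S n))
      by (intros t; apply prodC_ext; intros i _; destruct (t i); reflexivity).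
    rewrite (Hind s), (Hind (fun i => negb (s i))).
    apply prodC_signed_indicator, Hcount.
Qed.

Lemma fan_extend_periodic (P : Z * Z -> Prop) (n : nat) (u : nat -> Z * Z) :
  u (S n) = u O -> (forall i, (i <= n)%nat -> P (u i)) -> forall i, (i <= S n)%nat -> P (u i).
Proof.
  intros Hper H i Hi. destruct (Nat.eq_dec i (S n)) as [->|]; [rewrite Hper|]; apply H; lia.
Qed.

Lemma fan_edge_unimodular (w : C * C) (a b : Z * Z) : crossZ a b = 1%Z ->
  (crossZ (fan_edge w a) (fan_edge w b) * crossZ (fan_edge w a) (fan_edge w b) = 1)%Z.
Proof.
  intros Hab. unfold fan_edge. rewrite cone_edge_unimodular by auto.
  destruct (negb _); reflexivity.
Qed.

Lemma im_cross_fan_edge_pos (w : C * C) (a : Z * Z) :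
  im_cross w a <> 0 -> 0 < im_cross w (fan_edge w a).
Proof.
  intros H. unfold fan_edge, im_pos, cone_edge.
  destruct (Rlt_dec 0 (im_cross w a)); auto. rewrite im_cross_vopp. lra.
Qed.

Definition fan_box_prod (w : C * C) (x : C) (a b : Z * Z) (R : nat) : C :=
  cone_box_prod (fan_apex w a b) (fan_edge w a) (fan_edge w b) w x R.

Lemma fan_box_prod_converges (w : C * C) (x : C) (a b : Z * Z) :
  crossZ a b = 1%Z -> im_cross w a <> 0 -> im_cross w b <> 0 ->
  filterlim (fan_box_prod w x a b) eventually (locally (fan_qpoch w x a b)).
Proof.
  intros Hab Ha Hb. apply cone_box_prod_converges;
    [apply fan_edge_unimodular | apply im_cross_fan_edge_pos ..]; auto.
Qed.

(* The corollary with the inverted cone products moved to the right-hand side. *)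
Lemma fan_qpoch_identity (n : nat) (u : nat -> Z * Z) (w : C * C) (x : C) :
  u (S n) = u O ->
  (forall i, (i <= n)%nat -> crossZ (u i) (u (S i)) = 1%Z) ->
  sum_f_R0 (fun i => angleZ (u i) (u (S i))) n = 2 * PI ->
  (forall i, (i <= n)%nat -> im_cross w (u i) <> 0) ->
  prodC (fun i => if fan_sign w (u i) (u (S i)) then fan_qpoch w x (u i) (u (S i))
                  else RtoC 1) (S n)
  = ((1 - x) * prodC (fun i => if negb (fan_sign w (u i) (u (S i)))
                               then fan_qpoch w x (u i) (u (S i)) else RtoC 1) (S n))%C.
Proof.
  intros Hper Hcr Hsum Him.
  assert (Him' := fan_extend_periodic (fun a => im_cross w a <> 0) n u Hper Him).
  set (B := fun (t : bool) i R => if t then fan_box_prod w x (u i) (u (S i)) R else RtoC 1).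
  assert (HB : forall t : nat -> bool, filterlim (fun R => prodC (fun i => B (t i) i R) (S n))
      eventually (locally (prodC (fun i => if t i then fan_qpoch w x (u i) (u (S i))
                                            else RtoC 1) (S n)))).
  { intros t. apply filterlim_prodC. intros i Hi. unfold B. destruct (t i).
    - apply fan_box_prod_converges; [apply Hcr | apply Him' ..]; lia.
    - apply filterlim_const. }
  apply (filterlim_seq_C_unique
           (fun R => prodC (fun i => B (fan_sign w (u i) (u (S i))) i R) (S n))); [apply HB|].
  apply (filterlim_ext
           (fun R => (1 - x) * prodC (fun i => B (negb (fan_sign w (u i) (u (S i)))) i R) (S n))%C).
  - intros R. symmetry. unfold B, fan_box_prod, cone_box_prod.
    rewrite box_prod_signed_cones, ew_origin, Cmult_1_r; [reflexivity|].
    intros v. apply signed_cone_count; auto. apply Him; lia.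
  - apply filterlim_seq_Cmult; [apply filterlim_const | apply HB].
Qed.

Theorem corollary5p10 (n : nat) (u : nat -> Z * Z) (z : C) (w : C * C) :
  u (S n) = u O ->
  (forall i, (i <= n)%nat -> crossZ (u i) (u (S i)) = 1%Z) ->
  (* counterclockwise turning angles sum to 2 pi: the fan goes once around *)
  sum_f_R0 (fun i => angleZ (u i) (u (S i))) n = 2 * PI ->
  (forall i, (i <= n)%nat -> Im (crossCZ w (u i)) <> 0) ->
  (forall i, (i <= n)%nat ->
     qpoch_finite (e2pi z) (e2pi (crossCZ w (u i))) (e2pi (- crossCZ w (u (S i))))) ->
  prodC (fun i => qpoch (e2pi z) (e2pi (crossCZ w (u i)))
                        (e2pi (- crossCZ w (u (S i))))) (S n)
  = (RtoC 1 - e2pi z)%C.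
Proof.
  intros Hper Hcr Hsum Him Hfin.
  assert (Him' := fan_extend_periodic (fun a => Im (crossCZ w a) <> 0) n u Hper Him).
  assert (Hfactor := fun i (Hi : (i < S n)%nat) =>
    qpoch_fan_factor w (e2pi z) (u i) (u (S i)) (Him' i ltac:(lia)) (Him' (S i) ltac:(lia))
      (Hfin i ltac:(lia))).
  erewrite prodC_ext by (intros i Hi; exact (proj1 (Hfactor i Hi))).
  apply prodC_signed_inv.
  - intros i Hi. exact (proj2 (Hfactor i Hi)).
  - apply fan_qpoch_identity; auto.
Qed.
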